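(* There exists a function $\chi_{\ge1}\in C^\infty([0,\infty))$ such that $\chi_{\ge1}(x)=0$ for $x\le1$, $\chi_{\ge1}(x)=1$ for $x\ge2$, and $$\int_0^\infty\frac{\chi_{\ge1}(x)}{x^3}dx=\int_0^\infty x^3(1-\chi_{\ge1}(x))dx=\int_0^\infty x^3\log(x)(1-\chi_{\ge1}(x))dx=0.$$ Moreover, for any such function, for every $k\ge0$ there is $C_k>0$ (and there is $C>0$) such that the Hankel transform of order 1 of $x\mapsto\chi_{\ge1}(x)/x^5$ satisfies $$\Big|\widehat{\tfrac{\chi_{\ge1}(\cdot)}{(\cdot)^5}}(\eta)\Big|\le\begin{cases}C\eta^3\langle\log(\eta)\rangle, & \eta<1,\\ \dfrac{C_k}{\eta^k}, & \eta\ge1.\end{cases}$$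
   Context: The Hankel transform of order 1 is $\widehat f(\xi)=\int_0^\infty J_1(r\xi)f(r)\,r\,dr$, where $J_1$ is the Bessel function of order 1; $\langle x\rangle=\sqrt{1+x^2}$. *)

From Stdlib Require Import Reals.
From Coquelicot Require Import Coquelicot.
Open Scope R_scope.

Definition J1 (x : R) : R :=
  (x / 2) * Series (fun m => (-1) ^ m / (INR (Factorial.fact m) * INR (Factorial.fact (S m))) * (x / 2) ^ (2 * m)).

Definition jbr (x : R) : R := sqrt (1 + x ^ 2).

Definition is_int_0_inf (f : R -> R) (l : R) : Prop :=
  is_RInt_gen f (at_point 0) (Rbar_locally p_infty) l.
Definition ex_int_0_inf (f : R -> R) : Prop :=
  ex_RInt_gen f (at_point 0) (Rbar_locally p_infty).

Definition hankel1 (f : R -> R) (xi : R) : R :=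
  RInt_gen (fun r => J1 (r * xi) * f r * r) (at_point 0) (Rbar_locally p_infty).

(* The admissible cutoffs chi_{>=1}: a function on [0,oo) (values on x<0 are
   irrelevant), C^oo on (0,oo), zero on [0,1] (hence C^oo on [0,oo)),
   equal to 1 on [2,oo), with the three vanishing moment conditions. *)
Definition admissible_cutoff (chi : R -> R) : Prop :=
  (forall (n : nat) (x : R), 0 < x -> ex_derive_n chi n x) /\
  (forall x, 0 <= x <= 1 -> chi x = 0) /\
  (forall x, 2 <= x -> chi x = 1) /\
  is_int_0_inf (fun x => chi x / x ^ 3) 0 /\
  is_int_0_inf (fun x => x ^ 3 * (1 - chi x)) 0 /\
  is_int_0_inf (fun x => x ^ 3 * ln x * (1 - chi x)) 0.

(* Write the Hankel transform as the Bessel integral of J1 (r eta) against the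
   weight chi (r) / r^4.  Since J0' = - J1 and (x J1)' = x J0, integration by parts
   trades one derivative of the weight for a factor 1 / eta:
     int J1 (r eta) g = eta^-1 int J0 (r eta) g',
     int J0 (r eta) h = - eta^-1 int J1 (r eta) (h' - h / r).
   The weights chi^(n) (r) / r^(4+m) vanish on (0, 1) and are O(r^-2), and
   |J0|, |J1| <= 1 because J0^2 + J1^2 is nonincreasing on [0, oo), so all these
   integrals converge and k integrations by parts give C_k / eta^k.  For small eta
   the moment condition int chi / x^3 = 0 lets us replace J1 (r eta) by
   J1 (r eta) - r eta / 2 = O((r eta)^3 / (1 + (r eta)^2)), whose integral against
   r^-4 over [1, oo) is O(eta^3 (1 - ln eta)).

   For existence, correct a smooth step by functions supported in (1, 2).  The
   Euler operators u |-> x u' + c u multiply the moments against x^-3 and x^3 by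
   c + 2 and c - 4 (and act triangularly on x^3 ln x), so two iterated Euler
   images of a bump, together with the bump itself, make the three moment
   conditions a triangular linear system with nonzero pivots. *)

From Stdlib Require Import Reals Lra Psatz.
From Coquelicot Require Import Coquelicot.
Open Scope R_scope.

Ltac continuity_by_derive :=
  apply (ex_derive_continuous (K := R_AbsRing) (V := R_NormedModule)); auto_derive.

(* Coquelicot states these over normed modules; at type R the resulting
   equations can be closed by ring and field. *)
Lemma is_derive_comp_R (f g : R -> R) x df dg :
  is_derive f (g x) df -> is_derive g x dg -> is_derive (fun x => f (g x)) x (dg * df).
Proof. intros Hf Hg. exact (is_derive_comp f g x df dg Hf Hg). Qed.

Lemma is_derive_replace (f : R -> R) x (l l' : R) :
  l = l' -> is_derive f x l -> is_derive f x l'.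
Proof. intros ->. easy. Qed.

Lemma is_derive_ext_R (f g : R -> R) x (l : R) :
  (forall t, f t = g t) -> is_derive f x l -> is_derive g x l.
Proof. apply is_derive_ext. Qed.

Lemma continuous_bounded_on_segment (f : R -> R) a b :
  a <= b -> (forall c, a <= c <= b -> continuous f c) ->
  exists M, 0 <= M /\ forall c, a <= c <= b -> Rabs (f c) <= M.
Proof.
  intros Hab Hf.
  assert (Hf' : forall c, a <= c <= b -> continuity_pt f c)
    by (intros c Hc; apply continuity_pt_filterlim, Hf, Hc).
  destruct (continuity_ab_maj f a b Hab Hf') as [x1 [H1 _]].
  destruct (continuity_ab_min f a b Hab Hf') as [x2 [H2 _]].
  exists (Rmax (Rabs (f x1)) (Rabs (f x2))). split.
  - apply Rle_trans with (Rabs (f x1)); [apply Rabs_pos | apply Rmax_l].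
  - intros c Hc. specialize (H1 c Hc). specialize (H2 c Hc).
    pose proof (Rmax_l (Rabs (f x1)) (Rabs (f x2))).
    pose proof (Rmax_r (Rabs (f x1)) (Rabs (f x2))).
    pose proof (Rle_abs (f x1)). pose proof (Rle_abs (- f x2)). rewrite Rabs_Ropp in *.
    apply Rabs_le. lra.
Qed.

Lemma locally_open_interval a b r : a < r < b -> locally r (fun t => a < t < b).
Proof.
  intro H. assert (He : 0 < Rmin (r - a) (b - r)) by (apply Rmin_pos; lra).
  exists (mkposreal _ He). intros t Ht. change (Rabs (t - r) < Rmin (r - a) (b - r)) in Ht.
  pose proof (Rmin_l (r - a) (b - r)). pose proof (Rmin_r (r - a) (b - r)).
  apply Rabs_lt_between in Ht. lra.
Qed.

Lemma Derive_n_locally_const (f : R -> R) c a b n r :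
  a < r < b -> (forall t, a < t < b -> f t = c) ->
  Derive_n f n r = match n with O => c | S _ => 0 end.
Proof.
  intros Hr Hc. rewrite (Derive_n_ext_loc f (fun _ => c)).
  - destruct n; [reflexivity | apply Derive_n_const].
  - apply (filter_imp (fun t => a < t < b)); [auto | apply locally_open_interval, Hr].
Qed.

(** * The Bessel functions J0 and J1 *)

Definition J1_coef (m : nat) : R :=
  (-1) ^ m / (INR (Factorial.fact m) * INR (Factorial.fact (S m))).
Definition J0_coef (m : nat) : R :=
  (-1) ^ m / (INR (Factorial.fact m) * INR (Factorial.fact m)).

Definition J0 (x : R) : R := PSeries J0_coef ((x / 2) ^ 2).

Lemma J1_PSeries x : J1 x = x / 2 * PSeries J1_coef ((x / 2) ^ 2).
Proof.
  unfold J1, PSeries. f_equal. apply Series_ext. intro n.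
  unfold J1_coef. rewrite pow_mult. reflexivity.
Qed.

Lemma INR_fact_pos n : 0 < INR (Factorial.fact n).
Proof. apply lt_0_INR, Factorial.lt_O_fact. Qed.

Lemma INR_fact_S n : INR (Factorial.fact (S n)) = INR (S n) * INR (Factorial.fact n).
Proof. apply mult_INR. Qed.

Lemma CV_radius_J1_coef : CV_radius J1_coef = p_infty.
Proof.
  apply CV_radius_infinite_DAlembert.
  - intro n. unfold J1_coef. pose proof (INR_fact_pos n). pose proof (INR_fact_pos (S n)).
    apply Rmult_integral_contrapositive_currified.
    + apply pow_nonzero. lra.
    + apply Rinv_neq_0_compat. nra.
  - apply is_lim_seq_ext with (fun n => / (INR (S n) * INR (S (S n)))).
    + intro n. unfold J1_coef. rewrite (INR_fact_S (S n)), (INR_fact_S n).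
      pose proof (INR_fact_pos n). pose proof (pos_INR n).
      rewrite !S_INR, <- Rabs_Ropp, Rabs_pos_eq.
      * simpl pow. field. repeat split; try lra. apply pow_nonzero; lra.
      * simpl pow. unfold Rdiv.
        replace (- (-1 * (-1) ^ n * _ * _)) with
          (/ ((INR n + 1) * (INR n + 1 + 1))) by (field; repeat split; try lra; apply pow_nonzero; lra).
        apply Rlt_le, Rinv_0_lt_compat. nra.
    + apply is_lim_seq_le_le with (fun _ => 0) (fun n => / INR (S n)).
      * intro n. pose proof (pos_INR n). rewrite !S_INR. split.
        -- apply Rlt_le, Rinv_0_lt_compat. nra.
        -- apply Rinv_le_contravar; nra.
      * apply is_lim_seq_const.
      * replace (Finite 0) with (Rbar_inv p_infty) by reflexivity.
        apply is_lim_seq_inv; [|discriminate].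
        apply (is_lim_seq_incr_1 INR p_infty), is_lim_seq_INR.
Qed.

Lemma PS_derive_J0_coef n : PS_derive J0_coef n = - J1_coef n.
Proof.
  unfold PS_derive, J0_coef, J1_coef. rewrite (INR_fact_S n).
  pose proof (INR_fact_pos n). pose proof (pos_INR n). rewrite S_INR. simpl pow.
  field. lra.
Qed.

Lemma PS_derive_incr_1_J1_coef n : PS_derive (PS_incr_1 J1_coef) n = J0_coef n.
Proof.
  unfold PS_derive. change (PS_incr_1 J1_coef (S n)) with (J1_coef n).
  unfold J0_coef, J1_coef. rewrite (INR_fact_S n).
  pose proof (INR_fact_pos n). pose proof (pos_INR n). rewrite S_INR.
  field. lra.
Qed.

Lemma CV_radius_J0_coef : CV_radius J0_coef = p_infty.
Proof.
  rewrite <- (CV_radius_ext _ _ PS_derive_incr_1_J1_coef).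
  rewrite CV_radius_derive, CV_radius_incr_1. apply CV_radius_J1_coef.
Qed.

Lemma Rabs_lt_CV_radius_infinite (a : nat -> R) x :
  CV_radius a = p_infty -> Rbar_lt (Rabs x) (CV_radius a).
Proof. intros ->. exact I. Qed.

Lemma is_derive_half_sq x : is_derive (fun x => (x / 2) ^ 2) x (x / 2).
Proof. auto_derive; [easy | field]. Qed.

Lemma is_derive_J0 x : is_derive J0 x (- J1 x).
Proof.
  rewrite J1_PSeries.
  apply (is_derive_replace _ _ (x / 2 * PSeries (PS_derive J0_coef) ((x / 2) ^ 2))).
  - rewrite (PSeries_ext _ (PS_opp J1_coef) _ PS_derive_J0_coef), PSeries_opp. ring.
  - apply (is_derive_comp_R (PSeries J0_coef) (fun x => (x / 2) ^ 2)).
    + apply is_derive_PSeries, Rabs_lt_CV_radius_infinite, CV_radius_J0_coef.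
    + apply is_derive_half_sq.
Qed.

Lemma is_derive_id_mult_J1 x : is_derive (fun x => x * J1 x) x (x * J0 x).
Proof.
  apply is_derive_ext_R with (fun x => 2 * PSeries (PS_incr_1 J1_coef) ((x / 2) ^ 2)).
  { intro t. rewrite PSeries_incr_1, J1_PSeries. field. }
  apply (is_derive_replace _ _
    (2 * (x / 2 * PSeries (PS_derive (PS_incr_1 J1_coef)) ((x / 2) ^ 2)))).
  - rewrite (PSeries_ext _ _ _ PS_derive_incr_1_J1_coef). unfold J0. field.
  - apply is_derive_scal.
    apply (is_derive_comp_R (PSeries (PS_incr_1 J1_coef)) (fun x => (x / 2) ^ 2)).
    + apply is_derive_PSeries, Rabs_lt_CV_radius_infinite.
      rewrite CV_radius_incr_1. apply CV_radius_J1_coef.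
    + apply is_derive_half_sq.
Qed.

Lemma ex_derive_J1 x : ex_derive J1 x.
Proof.
  apply ex_derive_ext with (fun x => x / 2 * PSeries J1_coef ((x / 2) ^ 2)).
  { intro t. symmetry. apply J1_PSeries. }
  apply ex_derive_mult; [auto_derive; easy|].
  eexists. apply (is_derive_comp_R (PSeries J1_coef) (fun x => (x / 2) ^ 2)).
  - apply Derive_correct, ex_derive_PSeries, Rabs_lt_CV_radius_infinite, CV_radius_J1_coef.
  - apply is_derive_half_sq.
Qed.

Lemma is_derive_J1 x : x <> 0 -> is_derive J1 x (J0 x - J1 x / x).
Proof.
  intro Hx.
  pose proof (Derive_correct _ _ (ex_derive_J1 x)) as HJ1.
  assert (Hprod : is_derive (fun x => x * J1 x) x (1 * J1 x + x * Derive J1 x)).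
  { apply (is_derive_mult (fun x => x) J1); [auto_derive; easy | exact HJ1 |].
    intros; apply Rmult_comm. }
  pose proof (is_derive_unique _ _ _ (is_derive_id_mult_J1 x)) as E.
  rewrite (is_derive_unique _ _ _ Hprod) in E.
  replace (J0 x - J1 x / x) with (Derive J1 x); [exact HJ1|].
  field_simplify_eq; [lra | exact Hx].
Qed.

Lemma ex_derive_J0 x : ex_derive J0 x.
Proof. eexists. apply is_derive_J0. Qed.

Lemma continuous_J0 x : continuous J0 x.
Proof. apply (ex_derive_continuous (K := R_AbsRing) (V := R_NormedModule)), ex_derive_J0. Qed.

Lemma continuous_J1 x : continuous J1 x.
Proof. apply (ex_derive_continuous (K := R_AbsRing) (V := R_NormedModule)), ex_derive_J1. Qed.

Lemma J0_0 : J0 0 = 1.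
Proof.
  unfold J0. replace ((0 / 2) ^ 2) with 0 by field.
  rewrite PSeries_0. unfold J0_coef. simpl. field.
Qed.

Lemma J1_0 : J1 0 = 0.
Proof. rewrite J1_PSeries. field. Qed.

(* The energy J0^2 + J1^2 has derivative -2 J1^2 / x <= 0 on (0, oo). *)
Lemma J0_sq_plus_J1_sq_le_1 x : 0 <= x -> J0 x ^ 2 + J1 x ^ 2 <= 1.
Proof.
  intro Hx. destruct (Req_dec x 0) as [->|Hx0].
  { rewrite J0_0, J1_0. lra. }
  set (E := fun x => J0 x ^ 2 + J1 x ^ 2).
  destruct (MVT_gen E 0 x (fun t => - 2 * J1 t ^ 2 / t)) as [c [Hc Ec]].
  - intros t Ht. rewrite Rmin_left, Rmax_right in Ht by lra.
    replace (- 2 * J1 t ^ 2 / t) with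
      (INR 2 * (- J1 t) * J0 t ^ pred 2 + INR 2 * (J0 t - J1 t / t) * J1 t ^ pred 2)
      by (simpl; field; lra).
    apply (is_derive_plus (fun t => J0 t ^ 2) (fun t => J1 t ^ 2)).
    + apply (is_derive_pow J0 2 t), is_derive_J0.
    + apply (is_derive_pow J1 2 t), is_derive_J1. lra.
  - intros t _. apply continuity_pt_filterlim.
    apply (ex_derive_continuous (K := R_AbsRing) (V := R_NormedModule) E).
    unfold E. auto_derive. split; [apply ex_derive_J0 | split; [apply ex_derive_J1 | easy]].
  - rewrite Rmin_left, Rmax_right in Hc by lra.
    unfold E in Ec. rewrite J0_0, J1_0 in Ec.
    replace (- 2 * J1 c ^ 2 / c * (x - 0)) with (- 2 * (J1 c ^ 2 / c * x)) in Ec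
      by (unfold Rdiv; ring).
    assert (0 <= J1 c ^ 2 / c * x).
    { destruct (Req_dec c 0) as [->|Hc0]; [rewrite J1_0; unfold Rdiv; nra|].
      apply Rmult_le_pos; [apply Rmult_le_pos; [apply pow2_ge_0 | apply Rlt_le, Rinv_0_lt_compat] | ]; lra. }
    unfold E. lra.
Qed.

Lemma Rabs_J0_le_1 x : 0 <= x -> Rabs (J0 x) <= 1.
Proof.
  intro H. pose proof (J0_sq_plus_J1_sq_le_1 x H).
  apply Rsqr_incr_0_var; [|lra]. rewrite <- Rsqr_abs. unfold Rsqr. nra.
Qed.

Lemma Rabs_J1_le_1 x : 0 <= x -> Rabs (J1 x) <= 1.
Proof.
  intro H. pose proof (J0_sq_plus_J1_sq_le_1 x H).
  apply Rsqr_incr_0_var; [|lra]. rewrite <- Rsqr_abs. unfold Rsqr. nra.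
Qed.

Lemma J1_sub_half_le_cube : exists M, 0 <= M /\
  forall x, 0 <= x <= 1 -> Rabs (J1 x - x / 2) <= M * x ^ 3.
Proof.
  set (P := PSeries (PS_decr_1 J1_coef)).
  destruct (continuous_bounded_on_segment P 0 (1 / 4)) as [M [HM0 HM]]; [lra| |].
  { intros c _. apply (ex_derive_continuous (K := R_AbsRing) (V := R_NormedModule)).
    apply ex_derive_PSeries, Rabs_lt_CV_radius_infinite.
    rewrite CV_radius_decr_1. apply CV_radius_J1_coef. }
  exists (M / 8). split; [lra|]. intros x Hx.
  rewrite J1_PSeries, PSeries_decr_1
    by apply CV_radius_inside, Rabs_lt_CV_radius_infinite, CV_radius_J1_coef.
  replace (J1_coef 0) with 1 by (unfold J1_coef; simpl; field). fold P.
  replace (x / 2 * (1 + (x / 2) ^ 2 * P ((x / 2) ^ 2)) - x / 2)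
    with (x ^ 3 / 8 * P ((x / 2) ^ 2)) by field.
  assert (0 <= x ^ 3) by (apply pow_le; lra).
  rewrite Rabs_mult, (Rabs_pos_eq (x ^ 3 / 8)) by lra.
  assert (Rabs (P ((x / 2) ^ 2)) <= M) by (apply HM; split; nra).
  nra.
Qed.

Lemma J1_sub_half_bound : exists K, 0 < K /\
  forall x, 0 <= x -> Rabs (J1 x - x / 2) <= K * (x ^ 3 / (1 + x ^ 2)).
Proof.
  destruct J1_sub_half_le_cube as [M [HM0 HM]].
  exists (2 * M + 3). split; [lra|]. intros x Hx.
  set (q := x ^ 3 / (1 + x ^ 2)).
  assert (Hq : q * (1 + x ^ 2) = x ^ 3) by (unfold q; field; nra).
  assert (0 <= q) by (apply Rmult_le_pos; [apply pow_le | apply Rlt_le, Rinv_0_lt_compat]; nra).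
  destruct (Rle_lt_dec x 1) as [H1|H1].
  - assert (0 <= q * (1 - x ^ 2)) by (apply Rmult_le_pos; nra).
    specialize (HM x ltac:(lra)). nra.
  - eapply Rle_trans; [apply Rabs_triang|]. rewrite Rabs_Ropp, (Rabs_pos_eq (x / 2)) by lra.
    pose proof (Rabs_J1_le_1 x Hx).
    assert (x / 2 <= q).
    { apply Rmult_le_reg_r with (1 + x ^ 2); nra. }
    nra.
Qed.

(** * Riemann and improper integrals *)

Lemma ex_RInt_continuous_le (f : R -> R) a b :
  a <= b -> (forall z, a <= z <= b -> continuous f z) -> ex_RInt f a b.
Proof.
  intros Hab Hf. apply (ex_RInt_continuous (V := R_CompleteNormedModule)).
  rewrite Rmin_left, Rmax_right by lra. exact Hf.
Qed.

Lemma is_RInt_fun_zero a b : is_RInt (fun _ : R => 0) a b 0.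
Proof.
  pose proof (is_RInt_const (V := R_NormedModule) a b 0) as H.
  assert (E : scal (b - a) (0 : R) = 0) by (unfold scal; simpl; unfold mult; simpl; ring).
  change (is_RInt (fun _ : R => 0) a b (scal (b - a) (0 : R))) in H.
  rewrite E in H. exact H.
Qed.

Lemma is_RInt_zero_on_open (h : R -> R) a b :
  a <= b -> (forall r, a < r < b -> h r = 0) -> is_RInt h a b 0.
Proof.
  intros Hab H. apply (is_RInt_ext (fun _ => 0)).
  - intros x Hx. rewrite Rmin_left, Rmax_right in Hx by lra. symmetry. auto.
  - apply is_RInt_fun_zero.
Qed.

Lemma RInt_ext_R (f g : R -> R) a b :
  (forall x, Rmin a b < x < Rmax a b -> f x = g x) -> RInt f a b = RInt g a b.
Proof. apply RInt_ext. Qed.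

Lemma is_RInt_ext_R (f g : R -> R) a b (l : R) :
  (forall x, Rmin a b < x < Rmax a b -> f x = g x) -> is_RInt f a b l -> is_RInt g a b l.
Proof. apply is_RInt_ext. Qed.

Lemma is_RInt_Chasles_R (f : R -> R) a b c (l1 l2 : R) :
  is_RInt f a b l1 -> is_RInt f b c l2 -> is_RInt f a c (l1 + l2).
Proof. apply (is_RInt_Chasles (V := R_NormedModule)). Qed.

Lemma is_RInt_minus_R (f g : R -> R) a b (lf lg : R) :
  is_RInt f a b lf -> is_RInt g a b lg -> is_RInt (fun x => f x - g x) a b (lf - lg).
Proof. apply (is_RInt_minus (V := R_NormedModule)). Qed.

Lemma RInt_Chasles_R (f : R -> R) a b c :
  ex_RInt f a b -> ex_RInt f b c -> RInt f a b + RInt f b c = RInt f a c.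
Proof. apply (RInt_Chasles (V := R_CompleteNormedModule)). Qed.

Lemma RInt_lincomb (f g : R -> R) a b c d : ex_RInt f a b -> ex_RInt g a b ->
  RInt (fun x => c * f x + d * g x) a b = c * RInt f a b + d * RInt g a b.
Proof.
  intros Hf Hg.
  rewrite (RInt_plus (V := R_CompleteNormedModule) (fun x => c * f x) (fun x => d * g x)).
  - rewrite (RInt_scal (V := R_CompleteNormedModule) f), (RInt_scal (V := R_CompleteNormedModule) g); easy.
  - apply (ex_RInt_scal (V := R_CompleteNormedModule) f); easy.
  - apply (ex_RInt_scal (V := R_CompleteNormedModule) g); easy.
Qed.

Lemma ex_RInt_lincomb (f g : R -> R) a b c d : ex_RInt f a b -> ex_RInt g a b ->
  ex_RInt (fun x => c * f x + d * g x) a b.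
Proof.
  intros Hf Hg. apply (ex_RInt_plus (V := R_CompleteNormedModule));
    apply (ex_RInt_scal (V := R_CompleteNormedModule)); easy.
Qed.

Lemma Rabs_RInt_le_RInt (h w : R -> R) a b : a <= b ->
  (forall r, a <= r <= b -> continuous h r) -> (forall r, a <= r <= b -> continuous w r) ->
  (forall r, a < r < b -> Rabs (h r) <= w r) -> Rabs (RInt h a b) <= RInt w a b.
Proof.
  intros Hab Hh Hw Hb.
  eapply Rle_trans; [apply abs_RInt_le; [easy | apply ex_RInt_continuous_le; easy]|].
  apply RInt_le; try easy; apply ex_RInt_continuous_le; try easy.
  intros z Hz. apply (continuous_comp h Rabs); [auto | apply continuous_Rabs].
Qed.

Lemma is_RInt_gen_pinfty_of_is_lim (h : R -> R) a (l : R) :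
  (forall b, a <= b -> ex_RInt h a b) ->
  is_lim (fun b => RInt h a b) p_infty l ->
  is_RInt_gen h (at_point a) (Rbar_locally p_infty) l.
Proof.
  intros Hex H P HP. destruct (H P HP) as [M HM].
  apply (Filter_prod _ _ _ (fun x => x = a) (fun b => Rmax a M < b)).
  - reflexivity.
  - exists (Rmax a M). auto.
  - intros x y -> Hy. exists (RInt h a y). split.
    + apply (RInt_correct (V := R_CompleteNormedModule)), Hex.
      pose proof (Rmax_l a M). lra.
    + apply HM. pose proof (Rmax_r a M). lra.
Qed.

Lemma is_lim_RInt_of_is_RInt_gen_pinfty (h : R -> R) a (l : R) :
  is_RInt_gen h (at_point a) (Rbar_locally p_infty) l ->
  is_lim (fun b => RInt h a b) p_infty l.
Proof.
  intros H P HP. destruct (H P HP) as [Q S HQ HS HQS].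
  unfold filtermap. apply (filter_imp S); [|exact HS].
  intros b Hb. destruct (HQS a b HQ Hb) as [y [Hy Py]]. simpl in Hy.
  rewrite (is_RInt_unique (V := R_CompleteNormedModule) _ _ _ _ Hy). exact Py.
Qed.

Lemma is_lim_pinfty_abs_le (F : R -> R) (l : R) B K :
  is_lim F p_infty l -> (forall b, B <= b -> Rabs (F b) <= K) -> Rabs l <= K.
Proof.
  intros HF HK.
  assert (Hev : Rbar_locally' p_infty (fun b => - K <= F b <= K)).
  { exists B. intros b Hb. apply Rabs_le_between, HK. lra. }
  pose proof (is_lim_le_loc F (fun _ => K) p_infty l K
    (filter_imp _ _ (fun b Hb => proj2 Hb) Hev) HF (is_lim_const K p_infty)).
  pose proof (is_lim_le_loc (fun _ => - K) F p_infty (- K) l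
    (filter_imp _ _ (fun b Hb => proj1 Hb) Hev) (is_lim_const (- K) p_infty) HF).
  simpl in *. apply Rabs_le. lra.
Qed.

Lemma is_lim_pinfty_zero_of_le_inv (E : R -> R) C :
  (forall b, 1 <= b -> Rabs (E b) <= C / b) -> is_lim E p_infty 0.
Proof.
  intro H.
  assert (Hinv : is_lim (fun b => C * / b) p_infty 0).
  { replace (Finite 0) with (Rbar_mult C (Rbar_inv p_infty)) by (simpl; f_equal; ring).
    apply is_lim_scal_l, is_lim_inv; [apply is_lim_id | discriminate]. }
  apply (is_lim_le_le_loc (fun b => - (C * / b)) (fun b => C * / b)).
  - exists 1. intros b Hb. apply Rabs_le_between, H. lra.
  - replace (Finite 0) with (Rbar_opp 0) by (simpl; f_equal; ring).
    apply is_lim_opp, Hinv.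
  - exact Hinv.
Qed.

Lemma is_RInt_gen_shift_start (h : R -> R) a a' l :
  (forall r, Rmin a a' < r < Rmax a a' -> h r = 0) ->
  is_RInt_gen h (at_point a) (Rbar_locally p_infty) l ->
  is_RInt_gen h (at_point a') (Rbar_locally p_infty) l.
Proof.
  intros Hz H.
  replace l with (plus 0 l) by (unfold plus; simpl; ring).
  apply (is_RInt_gen_Chasles (V := R_NormedModule) (Fa := at_point a') h a 0 l); [|exact H].
  apply is_RInt_gen_at_point. apply (is_RInt_ext (fun _ => 0)).
  - intros x Hx. symmetry. apply Hz. rewrite Rmin_comm, Rmax_comm. exact Hx.
  - apply is_RInt_fun_zero.
Qed.

Lemma is_RInt_gen_abs_le (h : R -> R) a l B :
  is_RInt_gen h (at_point a) (Rbar_locally p_infty) l ->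
  (forall b, a <= b -> Rabs (RInt h a b) <= B) -> Rabs l <= B.
Proof.
  intros H HB. exact (is_lim_pinfty_abs_le _ l a B (is_lim_RInt_of_is_RInt_gen_pinfty h a l H) HB).
Qed.

Lemma RInt_inv_sq C u v : 0 < u -> 0 < v -> RInt (fun r => C / r ^ 2) u v = C / u - C / v.
Proof.
  intros Hu Hv. apply is_RInt_unique.
  replace (C / u - C / v) with (minus ((fun r => - C / r) v) ((fun r => - C / r) u))
    by (unfold minus, plus, opp; simpl; field; lra).
  apply (is_RInt_derive (V := R_CompleteNormedModule) (fun r => - C / r)).
  - intros x Hx. assert (0 < x) by (pose proof (Rmin_glb_lt u v 0 Hu Hv); lra).
    auto_derive; [lra | field; lra].
  - intros x Hx. assert (0 < x) by (pose proof (Rmin_glb_lt u v 0 Hu Hv); lra).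
    continuity_by_derive. nra.
Qed.

Lemma Rabs_RInt_le_inv_sq (h : R -> R) C u v : 1 <= u <= v ->
  (forall r, u <= r <= v -> continuous h r) ->
  (forall r, 1 <= r -> Rabs (h r) <= C / r ^ 2) ->
  Rabs (RInt h u v) <= C / u - C / v.
Proof.
  intros Huv Hc Hb. rewrite <- RInt_inv_sq by lra.
  apply Rabs_RInt_le_RInt; [lra | exact Hc | | intros r Hr; apply Hb; lra].
  intros r Hr. continuity_by_derive. nra.
Qed.

Lemma inv_sq_decay_cauchy (h : R -> R) C :
  (forall r, 1 <= r -> continuous h r) ->
  (forall r, 1 <= r -> Rabs (h r) <= C / r ^ 2) ->
  exists l : R, is_lim (fun b => RInt h 1 b) p_infty l.
Proof.
  intros Hc Hb.
  assert (HC : 0 <= C).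
  { specialize (Hb 1 (Rle_refl 1)). pose proof (Rabs_pos (h 1)). simpl in Hb. lra. }
  assert (Hex : forall u v, 1 <= u -> 1 <= v -> ex_RInt h u v).
  { intros u v Hu Hv. apply (ex_RInt_continuous (V := R_CompleteNormedModule)).
    intros z Hz. apply Hc. pose proof (Rmin_glb u v 1). lra. }
  assert (Htail : forall u v, 1 <= u <= v -> Rabs (RInt h u v) <= C / u).
  { intros u v Huv.
    eapply Rle_trans; [apply (Rabs_RInt_le_inv_sq h C u v); [lra | intros; apply Hc; lra | exact Hb]|].
    assert (0 <= C / v) by (apply Rmult_le_pos; [|apply Rlt_le, Rinv_0_lt_compat]; lra). lra. }
  destruct (proj1 (filterlim_locally_cauchy (U := R_CompleteSpace) (F := Rbar_locally p_infty)
    (fun b => RInt h 1 b))) as [l Hl]; [|exists l; exact Hl].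
  intros eps. pose proof (cond_pos eps).
  exists (fun b => Rmax 1 (C / eps) < b). split; [exists (Rmax 1 (C / eps)); auto|].
  intros u v Hu Hv. pose proof (Rmax_l 1 (C / eps)). pose proof (Rmax_r 1 (C / eps)).
  assert (Hsmall : forall w, Rmax 1 (C / eps) < w -> C / w < eps).
  { intros w Hw. apply (Rmult_lt_reg_r w); [lra|].
    unfold Rdiv. rewrite Rmult_assoc, Rinv_l, Rmult_1_r by lra.
    assert (eps * (C / eps) = C) by (field; lra). nra. }
  change (Rabs (RInt h 1 v - RInt h 1 u) < eps).
  rewrite <- (RInt_Chasles_R h 1 u v) by (apply Hex; lra).
  replace (RInt h 1 u + RInt h u v - RInt h 1 u) with (RInt h u v) by lra.
  destruct (Rle_lt_dec u v).
  - pose proof (Htail u v ltac:(lra)). pose proof (Hsmall u Hu). lra.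
  - rewrite <- (opp_RInt_swap (V := R_CompleteNormedModule)) by (apply Hex; lra).
    change (Rabs (- RInt h v u) < eps). rewrite Rabs_Ropp.
    pose proof (Htail v u ltac:(lra)). pose proof (Hsmall v Hv). lra.
Qed.

Lemma inv_sq_decay_integrable (h : R -> R) C :
  (forall r, 0 < r -> continuous h r) ->
  (forall r, 0 < r < 1 -> h r = 0) ->
  (forall r, 1 <= r -> Rabs (h r) <= C / r ^ 2) ->
  exists l, is_RInt_gen h (at_point 0) (Rbar_locally p_infty) l /\ Rabs l <= C.
Proof.
  intros Hc Hz Hb.
  destruct (inv_sq_decay_cauchy h C) as [l Hl]; [intros; apply Hc; lra | exact Hb |].
  assert (Hgen : is_RInt_gen h (at_point 1) (Rbar_locally p_infty) l).
  { apply is_RInt_gen_pinfty_of_is_lim; [|exact Hl].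
    intros b Hb1. apply ex_RInt_continuous_le; [lra | intros; apply Hc; lra]. }
  exists l. split.
  - apply (is_RInt_gen_shift_start h 1); [|exact Hgen].
    intros r Hr. rewrite Rmin_right, Rmax_left in Hr by lra. apply Hz. lra.
  - apply (is_RInt_gen_abs_le h 1 l C Hgen). intros b Hb1.
    eapply Rle_trans; [apply (Rabs_RInt_le_inv_sq h C 1 b); [lra | intros; apply Hc; lra | exact Hb]|].
    assert (HC : 0 <= C).
    { specialize (Hb 1 (Rle_refl 1)). pose proof (Rabs_pos (h 1)). simpl in Hb. lra. }
    assert (0 <= C / b) by (apply Rmult_le_pos; [|apply Rlt_le, Rinv_0_lt_compat]; lra).
    unfold Rdiv at 1. rewrite Rinv_1. lra.
Qed.

Lemma is_RInt_gen_by_parts (f f' g g' : R -> R) a (l : R) :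
  (forall r, a <= r -> is_derive f r (f' r)) ->
  (forall r, a <= r -> is_derive g r (g' r)) ->
  (forall r, a <= r -> continuous f' r) ->
  (forall r, a <= r -> continuous g' r) ->
  f a * g a = 0 ->
  is_lim (fun b => f b * g b) p_infty 0 ->
  is_RInt_gen (fun r => f r * g' r) (at_point a) (Rbar_locally p_infty) l ->
  is_RInt_gen (fun r => f' r * g r) (at_point a) (Rbar_locally p_infty) (- l).
Proof.
  intros Hf Hg Hf' Hg' Ha Hlim H.
  assert (Hparts : forall b, a <= b ->
    is_RInt (fun r => f' r * g r + f r * g' r) a b (f b * g b - f a * g a)).
  { intros b Hb.
    apply (is_RInt_scal_derive (V := R_CompleteNormedModule) f g f' g' a b);
      rewrite Rmin_left, Rmax_right by lra; intros t Ht;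
      [apply Hf | apply Hg | apply Hf' | apply Hg']; lra. }
  assert (Hcont : forall r, a <= r -> continuous (fun r => f' r * g r) r).
  { intros r Hr. apply (continuous_mult (K := R_AbsRing)); [auto|].
    apply (ex_derive_continuous (K := R_AbsRing) (V := R_NormedModule)).
    eexists. apply Hg, Hr. }
  apply is_RInt_gen_pinfty_of_is_lim.
  { intros b Hb. apply ex_RInt_continuous_le; [exact Hb | intros; apply Hcont; lra]. }
  apply (is_lim_ext_loc (fun b => f b * g b - RInt (fun r => f r * g' r) a b)).
  - exists a. intros b Hb.
    assert (Hfg' : ex_RInt (fun r => f r * g' r) a b).
    { apply ex_RInt_continuous_le; [lra|]. intros z Hz.
      apply (continuous_mult (K := R_AbsRing)); [|apply Hg'; lra].
      apply (ex_derive_continuous (K := R_AbsRing) (V := R_NormedModule)).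
      eexists. apply Hf. lra. }
    assert (Hf'g : ex_RInt (fun r => f' r * g r) a b)
      by (apply ex_RInt_continuous_le; [lra | intros; apply Hcont; lra]).
    pose proof (is_RInt_unique _ _ _ _ (Hparts b ltac:(lra))) as E.
    rewrite (RInt_plus (V := R_CompleteNormedModule)) in E by easy.
    unfold plus in E; simpl in E. lra.
  - replace (Finite (- l)) with (Finite (0 - l)) by (f_equal; ring).
    apply is_lim_minus'; [exact Hlim|].
    apply is_lim_RInt_of_is_RInt_gen_pinfty, H.
Qed.

Lemma is_RInt_gen_ext_pinfty (f g : R -> R) a (l : R) :
  (forall r, a < r -> f r = g r) ->
  is_RInt_gen f (at_point a) (Rbar_locally p_infty) l ->
  is_RInt_gen g (at_point a) (Rbar_locally p_infty) l.
Proof.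
  intro Hfg. apply (is_RInt_gen_ext (V := R_NormedModule)).
  apply (Filter_prod _ _ _ (fun x => x = a) (fun b => a < b)); [reflexivity | exists a; auto|].
  intros x y -> Hy z Hz. simpl in Hz. rewrite Rmin_left, Rmax_right in Hz by lra.
  apply Hfg. lra.
Qed.

Lemma is_RInt_gen_pinfty_Chasles (h : R -> R) a b (I L : R) :
  is_RInt h a b I -> is_RInt_gen h (at_point b) (Rbar_locally p_infty) L ->
  is_RInt_gen h (at_point a) (Rbar_locally p_infty) (I + L).
Proof.
  intros HI HL.
  apply (is_RInt_gen_Chasles (V := R_NormedModule) (Fa := at_point a) h b I L); [|exact HL].
  apply is_RInt_gen_at_point, HI.
Qed.

Lemma is_RInt_gen_pinfty_zero_tail (h : R -> R) c :
  (forall r, c < r -> h r = 0) -> is_RInt_gen h (at_point c) (Rbar_locally p_infty) 0.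
Proof.
  intro Hz. apply (is_RInt_gen_ext_pinfty (fun _ => 0)); [intros r Hr; symmetry; auto|].
  apply is_RInt_gen_pinfty_of_is_lim.
  - intros b _. apply ex_RInt_const.
  - apply (is_lim_ext_loc (fun _ => 0)); [|apply is_lim_const].
    exists c. intros b Hb. symmetry. apply is_RInt_unique, is_RInt_zero_on_open; [lra | easy].
Qed.

(** * Bessel integrals against an admissible cutoff *)

Definition bessel_integral (J g : R -> R) (eta : R) : R :=
  RInt_gen (fun r => J (r * eta) * g r) (at_point 0) (Rbar_locally p_infty).

Lemma bessel_integrand_bound (J g : R -> R) C eta : 0 < eta ->
  (forall x, 0 <= x -> Rabs (J x) <= 1) -> (forall r, 1 <= r -> Rabs (g r) <= C / r ^ 2) ->
  forall r, 1 <= r -> Rabs (J (r * eta) * g r) <= C / r ^ 2.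
Proof.
  intros He HJ Hg r Hr. rewrite Rabs_mult.
  specialize (HJ (r * eta) ltac:(nra)). specialize (Hg r Hr).
  pose proof (Rabs_pos (g r)). pose proof (Rabs_pos (J (r * eta))). nra.
Qed.

Lemma continuous_scaled (J : R -> R) eta r :
  (forall x, continuous J x) -> continuous (fun r => J (r * eta)) r.
Proof.
  intro HJ. apply (continuous_comp (fun r => r * eta) J); [|apply HJ].
  apply (continuous_mult (K := R_AbsRing)); [apply continuous_id | apply continuous_const].
Qed.

Lemma is_derive_J0_scaled eta r : is_derive (fun r => J0 (r * eta)) r (- eta * J1 (r * eta)).
Proof.
  apply (is_derive_replace _ _ (eta * - J1 (r * eta))); [ring|].
  apply (is_derive_comp_R J0 (fun r => r * eta)); [apply is_derive_J0 | auto_derive; [easy | ring]].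
Qed.

Lemma is_derive_id_mult_J1_scaled eta r : eta <> 0 ->
  is_derive (fun r => r * J1 (r * eta)) r (eta * (r * J0 (r * eta))).
Proof.
  intro He.
  apply (is_derive_ext_R (fun r => / eta * ((fun x => x * J1 x) (r * eta)))).
  { intro t. field. exact He. }
  apply (is_derive_replace _ _ (/ eta * (eta * (r * eta * J0 (r * eta))))); [field; exact He|].
  apply is_derive_scal.
  apply (is_derive_comp_R (fun x => x * J1 x) (fun r => r * eta));
    [apply is_derive_id_mult_J1 | auto_derive; [easy | ring]].
Qed.

Lemma RInt_inv_mul_one_plus_sq_le eta b : 0 < eta < 1 -> 1 <= b ->
  RInt (fun r => / (r * (1 + r ^ 2 * eta ^ 2))) 1 b <= 1 - ln eta.
Proof.
  intros He Hb.
  replace (RInt _ 1 b) with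
    ((ln b - ln (1 + b ^ 2 * eta ^ 2) / 2) - (ln 1 - ln (1 + 1 ^ 2 * eta ^ 2) / 2)).
  - rewrite ln_1.
    assert (2 * (ln b + ln eta) <= ln (1 + b ^ 2 * eta ^ 2)).
    { rewrite <- ln_mult by lra.
      replace (2 * ln (b * eta)) with (ln ((b * eta) ^ 2)) by (rewrite ln_pow by nra; simpl; ring).
      apply Rlt_le, ln_increasing; [apply pow_lt; nra | rewrite Rpow_mult_distr; lra]. }
    assert (ln (1 + 1 ^ 2 * eta ^ 2) <= ln 2) by (apply Rlt_le, ln_increasing; nra).
    assert (0 <= ln (1 + 1 ^ 2 * eta ^ 2)) by (rewrite <- ln_1; apply Rlt_le, ln_increasing; nra).
    assert (ln 2 < 1).
    { rewrite <- (ln_exp 1). apply ln_increasing; [lra|].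
      pose proof (exp_ineq1 1 ltac:(lra)). lra. }
    lra.
  - symmetry. apply is_RInt_unique.
    apply (is_RInt_derive (V := R_CompleteNormedModule) (fun r => ln r - ln (1 + r ^ 2 * eta ^ 2) / 2));
      rewrite Rmin_left, Rmax_right by lra.
    + intros x Hx. auto_derive; [repeat split; nra | field; split; nra].
    + intros x Hx. continuity_by_derive. apply Rgt_not_eq, Rmult_lt_0_compat; [lra|].
      apply Rplus_lt_le_0_compat; [lra | apply Rmult_le_pos; nra].
Qed.

Lemma Rabs_plus_1_le_2_jbr t : Rabs t + 1 <= 2 * jbr t.
Proof.
  unfold jbr.
  assert (Rabs t <= sqrt (1 + t ^ 2)).
  { rewrite <- (sqrt_pow2 (Rabs t)) by apply Rabs_pos. apply sqrt_le_1_alt.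
    rewrite <- Rsqr_pow2, <- Rsqr_abs, Rsqr_pow2. lra. }
  assert (1 <= sqrt (1 + t ^ 2)).
  { rewrite <- sqrt_1 at 1. apply sqrt_le_1_alt. pose proof (pow2_ge_0 t). lra. }
  lra.
Qed.

Section AdmissibleCutoff.

Variable chi : R -> R.
Hypothesis Hchi : admissible_cutoff chi.

Lemma Derive_n_chi_vanish n r : 0 < r < 1 -> Derive_n chi n r = 0.
Proof.
  intro Hr. destruct Hchi as [_ [H0 _]].
  rewrite (Derive_n_locally_const chi 0 0 1); [now destruct n | exact Hr |].
  intros t Ht. apply H0. lra.
Qed.

Lemma is_derive_Derive_n_chi n r : 0 < r ->
  is_derive (Derive_n chi n) r (Derive_n chi (S n) r).
Proof. intro Hr. apply Derive_correct, (proj1 Hchi (S n) r Hr). Qed.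

Lemma Derive_n_chi_bounded n : exists M, 0 <= M /\
  forall r, 1 <= r -> Rabs (Derive_n chi n r) <= M.
Proof.
  destruct (continuous_bounded_on_segment (Derive_n chi n) 1 3) as [M [HM0 HM]]; [lra| |].
  { intros c Hc. apply (ex_derive_continuous (K := R_AbsRing) (V := R_NormedModule)).
    eexists. apply is_derive_Derive_n_chi. lra. }
  exists (Rmax M 1). split; [apply Rle_trans with M; [easy | apply Rmax_l]|].
  intros r Hr. destruct (Rle_lt_dec r 3).
  - apply Rle_trans with M; [apply HM; lra | apply Rmax_l].
  - destruct Hchi as [_ [_ [H1 _]]].
    rewrite (Derive_n_locally_const chi 1 2 (r + 1)); [|lra | intros; apply H1; lra].
    apply Rle_trans with 1; [|apply Rmax_r].
    destruct n; [rewrite Rabs_R1 | rewrite Rabs_R0]; lra.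
Qed.

Inductive chi_weight : (R -> R) -> Prop :=
| chi_weight_Derive_n n : chi_weight (fun r => Derive_n chi n r / r ^ 4)
| chi_weight_div_id g : chi_weight g -> chi_weight (fun r => g r / r)
| chi_weight_plus g h : chi_weight g -> chi_weight h -> chi_weight (fun r => g r + h r)
| chi_weight_scal c g : chi_weight g -> chi_weight (fun r => c * g r).

Lemma chi_weight_derive g : chi_weight g ->
  exists g', chi_weight g' /\ forall r, 0 < r -> is_derive g r (g' r).
Proof.
  induction 1 as [n | g Hg [g' [Hg' Hd]] | g h _ [g' [Hg' Hdg]] _ [h' [Hh' Hdh]]
    | c g _ [g' [Hg' Hd]]].
  - exists (fun r => Derive_n chi (S n) r / r ^ 4 + -4 * (Derive_n chi n r / r ^ 4 / r)).
    split; [repeat constructor|].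
    intros r Hr. pose proof (is_derive_Derive_n_chi n r Hr) as Hn.
    assert (Hr4 : 0 < r ^ 4) by (apply pow_lt; lra). simpl in Hr4.
    auto_derive; [split; [eexists; exact Hn | split; [lra | easy]]|].
    change (Derive (fun x => Derive_n chi n x) r) with (Derive_n chi (S n) r). field. lra.
  - exists (fun r => g' r / r + -1 * (g r / r / r)). split.
    { apply chi_weight_plus; [apply chi_weight_div_id, Hg'|].
      apply chi_weight_scal, chi_weight_div_id, chi_weight_div_id, Hg. }
    intros r Hr. specialize (Hd r Hr).
    auto_derive; [split; [eexists; exact Hd | split; [lra | easy]]|].
    replace (Derive (fun x => g x) r) with (g' r) by (symmetry; apply is_derive_unique, Hd).
    field. lra.
  - exists (fun r => g' r + h' r). split; [constructor; easy|].
    intros r Hr. apply (is_derive_plus g h); auto.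
  - exists (fun r => c * g' r). split; [constructor; easy|].
    intros r Hr. apply is_derive_scal; auto.
Qed.

Lemma chi_weight_continuous g : chi_weight g -> forall r, 0 < r -> continuous g r.
Proof.
  intros Hg r Hr. destruct (chi_weight_derive g Hg) as [g' [_ Hd]].
  apply (ex_derive_continuous (K := R_AbsRing) (V := R_NormedModule)).
  eexists. apply Hd, Hr.
Qed.

Lemma chi_weight_vanish g : chi_weight g -> forall r, 0 < r < 1 -> g r = 0.
Proof.
  induction 1; intros r Hr.
  - rewrite Derive_n_chi_vanish by exact Hr. unfold Rdiv. ring.
  - rewrite IHchi_weight by exact Hr. unfold Rdiv. ring.
  - rewrite IHchi_weight1, IHchi_weight2 by exact Hr. ring.
  - rewrite IHchi_weight by exact Hr. ring.
Qed.

Lemma chi_weight_bound g : chi_weight g ->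
  exists C, 0 <= C /\ forall r, 1 <= r -> Rabs (g r) <= C / r ^ 2.
Proof.
  induction 1 as [n | g _ [C [HC HB]] | g h _ [C1 [HC1 HB1]] _ [C2 [HC2 HB2]]
    | c g _ [C [HC HB]]].
  - destruct (Derive_n_chi_bounded n) as [M [HM0 HM]]. exists M. split; [easy|].
    intros r Hr. specialize (HM r Hr).
    assert (1 <= r ^ 2) by nra.
    unfold Rdiv. rewrite Rabs_mult, Rabs_inv, (Rabs_pos_eq (r ^ 4)) by (apply pow_le; lra).
    apply Rmult_le_compat; [apply Rabs_pos | apply Rlt_le, Rinv_0_lt_compat; nra | easy|].
    apply Rinv_le_contravar; nra.
  - exists C. split; [easy|]. intros r Hr. specialize (HB r Hr).
    unfold Rdiv at 1. rewrite Rabs_mult, Rabs_inv, (Rabs_pos_eq r) by lra.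
    assert (0 <= C / r ^ 2) by (apply Rmult_le_pos; [|apply Rlt_le, Rinv_0_lt_compat]; nra).
    assert (0 < / r <= 1) by (split; [apply Rinv_0_lt_compat | rewrite <- Rinv_1; apply Rinv_le_contravar]; lra).
    pose proof (Rabs_pos (g r)). nra.
  - exists (C1 + C2). split; [lra|]. intros r Hr.
    eapply Rle_trans; [apply Rabs_triang|]. specialize (HB1 r Hr). specialize (HB2 r Hr).
    unfold Rdiv in *. lra.
  - exists (Rabs c * C). split; [apply Rmult_le_pos; [apply Rabs_pos | easy]|].
    intros r Hr. rewrite Rabs_mult. unfold Rdiv. rewrite Rmult_assoc.
    apply Rmult_le_compat_l; [apply Rabs_pos | apply HB, Hr].
Qed.

Lemma bessel_integral_spec J g eta C :
  (forall x, continuous J x) -> (forall x, 0 <= x -> Rabs (J x) <= 1) ->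
  chi_weight g -> (forall r, 1 <= r -> Rabs (g r) <= C / r ^ 2) -> 0 < eta ->
  is_RInt_gen (fun r => J (r * eta) * g r) (at_point 0) (Rbar_locally p_infty)
    (bessel_integral J g eta) /\ Rabs (bessel_integral J g eta) <= C.
Proof.
  intros HJc HJb Hg HC He.
  destruct (inv_sq_decay_integrable (fun r => J (r * eta) * g r) C) as [l [Hl Hle]].
  - intros r Hr. apply (continuous_mult (K := R_AbsRing));
      [apply continuous_scaled, HJc | apply chi_weight_continuous; easy].
  - intros r Hr. rewrite (chi_weight_vanish g Hg r Hr). ring.
  - apply bessel_integrand_bound; easy.
  - unfold bessel_integral. rewrite (is_RInt_gen_unique (V := R_CompleteNormedModule) _ _ Hl).
    split; easy.
Qed.

(* The weights need not be differentiable at 0, so integrations by parts start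
   at 1/2, where they already vanish. *)
Lemma is_RInt_gen_bessel_integral_half J g eta :
  (forall x, continuous J x) -> (forall x, 0 <= x -> Rabs (J x) <= 1) ->
  chi_weight g -> 0 < eta ->
  is_RInt_gen (fun r => J (r * eta) * g r) (at_point (1 / 2)) (Rbar_locally p_infty)
    (bessel_integral J g eta).
Proof.
  intros HJc HJb Hg He. destruct (chi_weight_bound g Hg) as [C [_ HC]].
  apply (is_RInt_gen_shift_start _ 0); [|apply (bessel_integral_spec J g eta C); easy].
  intros r Hr. rewrite Rmin_left, Rmax_right in Hr by lra.
  rewrite (chi_weight_vanish g Hg r) by lra. ring.
Qed.

Lemma bessel_integral_of_scaled J g eta c L : chi_weight g -> c <> 0 ->
  is_RInt_gen (fun r => c * J (r * eta) * g r) (at_point (1 / 2)) (Rbar_locally p_infty) L ->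
  bessel_integral J g eta = / c * L.
Proof.
  intros Hg Hc H. apply (is_RInt_gen_unique (V := R_CompleteNormedModule)).
  apply (is_RInt_gen_shift_start _ (1 / 2)).
  { intros r Hr. rewrite Rmin_right, Rmax_left in Hr by lra.
    rewrite (chi_weight_vanish g Hg r) by lra. ring. }
  apply (is_RInt_gen_ext_pinfty (fun r => scal (/ c) (c * J (r * eta) * g r))).
  - intros r _. unfold scal; simpl; unfold mult; simpl. field. exact Hc.
  - apply (is_RInt_gen_scal (V := R_NormedModule)), H.
Qed.

Lemma bessel_boundary_vanish J g eta :
  (forall x, 0 <= x -> Rabs (J x) <= 1) -> chi_weight g -> 0 < eta ->
  is_lim (fun b => J (b * eta) * g b) p_infty 0.
Proof.
  intros HJ Hg He. destruct (chi_weight_bound g Hg) as [C [HC HB]].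
  apply (is_lim_pinfty_zero_of_le_inv _ C). intros b Hb.
  eapply Rle_trans; [apply (bessel_integrand_bound J g C eta); easy|].
  apply Rmult_le_compat_l; [easy|]. apply Rinv_le_contravar; [lra | simpl; nra].
Qed.

Lemma bessel_integral_J1_parts g g' eta :
  chi_weight g -> chi_weight g' -> (forall r, 0 < r -> is_derive g r (g' r)) -> 0 < eta ->
  bessel_integral J1 g eta = / eta * bessel_integral J0 g' eta.
Proof.
  intros Hg Hg' Hd He.
  rewrite (bessel_integral_of_scaled J1 g eta (- eta) (- bessel_integral J0 g' eta) Hg);
    [field; lra | lra |].
  apply (is_RInt_gen_by_parts (fun r => J0 (r * eta)) (fun r => - eta * J1 (r * eta)) g g').
  - intros r _. apply is_derive_J0_scaled.
  - intros r Hr. apply Hd. lra.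
  - intros r _. apply (continuous_mult (K := R_AbsRing));
      [apply continuous_const | apply continuous_scaled, continuous_J1].
  - intros r Hr. apply chi_weight_continuous; [easy | lra].
  - rewrite (chi_weight_vanish g Hg) by lra. ring.
  - apply bessel_boundary_vanish; [apply Rabs_J0_le_1 | easy | easy].
  - apply is_RInt_gen_bessel_integral_half; [apply continuous_J0 | apply Rabs_J0_le_1 | easy | easy].
Qed.

Lemma bessel_integral_J0_parts h h' eta :
  chi_weight h -> chi_weight h' -> (forall r, 0 < r -> is_derive h r (h' r)) -> 0 < eta ->
  bessel_integral J0 h eta = - / eta * bessel_integral J1 (fun r => h' r + -1 * (h r / r)) eta.
Proof.
  intros Hh Hh' Hd He.
  set (h2 := fun r => h' r + -1 * (h r / r)).
  assert (Hh2 : chi_weight h2)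
    by (apply chi_weight_plus; [easy | apply chi_weight_scal, chi_weight_div_id, Hh]).
  rewrite (bessel_integral_of_scaled J0 h eta eta (- bessel_integral J1 h2 eta) Hh);
    [field; lra | lra |].
  apply (is_RInt_gen_ext_pinfty (fun r => eta * (r * J0 (r * eta)) * (h r / r))).
  { intros r Hr. field. lra. }
  apply (is_RInt_gen_by_parts (fun r => r * J1 (r * eta)) (fun r => eta * (r * J0 (r * eta)))
    (fun r => h r / r) (fun r => h' r / r + -1 * (h r / r / r))).
  - intros r _. apply is_derive_id_mult_J1_scaled. lra.
  - intros r Hr. specialize (Hd r ltac:(lra)).
    auto_derive; [split; [eexists; exact Hd | split; [lra | easy]]|].
    replace (Derive (fun x => h x) r) with (h' r) by (symmetry; apply is_derive_unique, Hd).
    field. lra.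
  - intros r _. apply (continuous_mult (K := R_AbsRing)); [apply continuous_const|].
    apply (continuous_mult (K := R_AbsRing)); [apply continuous_id | apply continuous_scaled, continuous_J0].
  - intros r Hr. apply chi_weight_continuous; [|lra].
    apply chi_weight_plus; [apply chi_weight_div_id, Hh'|].
    apply chi_weight_scal, chi_weight_div_id, chi_weight_div_id, Hh.
  - rewrite (chi_weight_vanish h Hh) by lra. unfold Rdiv. ring.
  - apply (is_lim_ext_loc (fun b => J1 (b * eta) * h b)).
    + exists 0. intros b Hb. field. lra.
    + apply bessel_boundary_vanish; [apply Rabs_J1_le_1 | easy | easy].
  - apply (is_RInt_gen_ext_pinfty (fun r => J1 (r * eta) * h2 r)).
    + intros r Hr. unfold h2. field. lra.
    + apply is_RInt_gen_bessel_integral_half;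
        [apply continuous_J1 | apply Rabs_J1_le_1 | easy | easy].
Qed.

Lemma bessel_integral_decay k : forall g, chi_weight g -> exists C, 0 <= C /\
  forall eta, 1 <= eta ->
    Rabs (bessel_integral J0 g eta) <= C / eta ^ k /\
    Rabs (bessel_integral J1 g eta) <= C / eta ^ k.
Proof.
  induction k as [|k IH]; intros g Hg.
  - destruct (chi_weight_bound g Hg) as [C [HC HB]]. exists C. split; [easy|].
    intros eta He. simpl. rewrite Rdiv_1_r. split.
    + apply (bessel_integral_spec J0 g eta C); [apply continuous_J0 | apply Rabs_J0_le_1 | easy | easy | lra].
    + apply (bessel_integral_spec J1 g eta C); [apply continuous_J1 | apply Rabs_J1_le_1 | easy | easy | lra].
  - destruct (chi_weight_derive g Hg) as [g' [Hg' Hd]].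
    set (h2 := fun r => g' r + -1 * (g r / r)).
    assert (Hh2 : chi_weight h2)
      by (apply chi_weight_plus; [easy | apply chi_weight_scal, chi_weight_div_id, Hg]).
    destruct (IH g' Hg') as [C1 [HC1 H1]]. destruct (IH h2 Hh2) as [C2 [HC2 H2]].
    exists (Rmax C1 C2). split; [apply Rle_trans with C1; [easy | apply Rmax_l]|].
    intros eta He.
    assert (Hk : 0 < eta ^ k) by (apply pow_lt; lra).
    assert (Hstep : forall C L, C <= Rmax C1 C2 -> Rabs L <= C / eta ^ k ->
      Rabs (/ eta * L) <= Rmax C1 C2 / eta ^ S k).
    { intros C L HC HL. rewrite Rabs_mult, Rabs_inv, (Rabs_pos_eq eta) by lra.
      replace (Rmax C1 C2 / eta ^ S k) with (/ eta * (Rmax C1 C2 / eta ^ k)) by (simpl; field; lra).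
      apply Rmult_le_compat_l; [apply Rlt_le, Rinv_0_lt_compat; lra|].
      apply Rle_trans with (C / eta ^ k); [easy|].
      apply Rmult_le_compat_r; [apply Rlt_le, Rinv_0_lt_compat | ]; lra. }
    rewrite (bessel_integral_J0_parts g g' eta Hg Hg' Hd), (bessel_integral_J1_parts g g' eta Hg Hg' Hd)
      by lra.
    rewrite Ropp_mult_distr_l_reverse, Rabs_Ropp. split.
    + apply (Hstep C2); [apply Rmax_r | apply (proj2 (H2 eta He))].
    + apply (Hstep C1); [apply Rmax_l | apply (proj1 (H1 eta He))].
Qed.

Lemma chi_weight_cutoff : chi_weight (fun r => chi r / r ^ 4).
Proof. exact (chi_weight_Derive_n 0). Qed.

Lemma is_RInt_gen_bessel_J1_sub_moment eta : 0 < eta ->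
  is_RInt_gen (fun r => (J1 (r * eta) - r * eta / 2) * (chi r / r ^ 4))
    (at_point 1) (Rbar_locally p_infty) (bessel_integral J1 (fun r => chi r / r ^ 4) eta).
Proof.
  intro He. destruct Hchi as [_ [H0 [_ [Hmoment _]]]].
  destruct (chi_weight_bound _ chi_weight_cutoff) as [C [_ HC]].
  destruct (bessel_integral_spec J1 _ eta C continuous_J1 Rabs_J1_le_1 chi_weight_cutoff HC He)
    as [HB _].
  pose proof (is_RInt_gen_minus (V := R_NormedModule) _ _ _ _ HB
    (is_RInt_gen_scal (V := R_NormedModule) _ (eta / 2) _ Hmoment)) as H.
  apply (is_RInt_gen_shift_start _ 0).
  { intros r Hr. rewrite Rmin_left, Rmax_right in Hr by lra. rewrite H0 by lra.
    unfold Rdiv. ring. }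
  replace (bessel_integral J1 (fun r => chi r / r ^ 4) eta)
    with (minus (bessel_integral J1 (fun r => chi r / r ^ 4) eta) (scal (eta / 2) 0))
    by (unfold minus, plus, opp, scal; simpl; unfold mult; simpl; ring).
  refine (is_RInt_gen_ext_pinfty _ _ 0 _ _ H).
  intros r Hr. unfold minus, plus, opp, scal; simpl; unfold mult; simpl. field. lra.
Qed.

Lemma bessel_J1_sub_moment_integrand_bound K M eta r :
  (forall x, 0 <= x -> Rabs (J1 x - x / 2) <= K * (x ^ 3 / (1 + x ^ 2))) ->
  (forall r, 1 <= r -> Rabs (chi r) <= M) -> 0 < K -> 0 < eta -> 1 <= r ->
  Rabs ((J1 (r * eta) - r * eta / 2) * (chi r / r ^ 4))
    <= K * M * eta ^ 3 * / (r * (1 + r ^ 2 * eta ^ 2)).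
Proof.
  intros HK HM HK0 He Hr.
  specialize (HK (r * eta) ltac:(nra)). specialize (HM r Hr).
  assert (0 < r ^ 4) by (apply pow_lt; lra).
  unfold Rdiv in *. rewrite !Rabs_mult, Rabs_inv, (Rabs_pos_eq (r ^ 4)), <- Rmult_assoc by lra.
  replace (K * M * eta ^ 3 * / (r * (1 + r ^ 2 * eta ^ 2)))
    with (K * ((r * eta) ^ 3 * / (1 + (r * eta) ^ 2)) * M * / r ^ 4) by (field; split; nra).
  apply Rmult_le_compat_r; [apply Rlt_le, Rinv_0_lt_compat; lra|].
  apply Rmult_le_compat; [apply Rabs_pos | apply Rabs_pos | exact HK | exact HM].
Qed.

Lemma bessel_integral_J1_small_eta : exists C, 0 < C /\
  forall eta, 0 < eta < 1 ->
    Rabs (bessel_integral J1 (fun r => chi r / r ^ 4) eta) <= C * eta ^ 3 * jbr (ln eta).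
Proof.
  destruct J1_sub_half_bound as [K [HK HKb]].
  destruct (Derive_n_chi_bounded 0) as [M [HM0 HM]].
  assert (HKM : 0 <= K * M) by (apply Rmult_le_pos; lra).
  exists (2 * K * M + 1). split; [lra|]. intros eta He.
  assert (Hw : forall r, 1 <= r -> 0 < r * (1 + r ^ 2 * eta ^ 2)).
  { intros r Hr. apply Rmult_lt_0_compat; [lra|].
    apply Rplus_lt_le_0_compat; [lra | apply Rmult_le_pos; apply pow2_ge_0]. }
  apply Rle_trans with (K * M * eta ^ 3 * (1 - ln eta)).
  - apply (is_RInt_gen_abs_le _ 1 _ _ (is_RInt_gen_bessel_J1_sub_moment eta (proj1 He))).
    intros b Hb.
    eapply Rle_trans;
      [apply (Rabs_RInt_le_RInt _ (fun r => K * M * eta ^ 3 * / (r * (1 + r ^ 2 * eta ^ 2))))|].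
    + exact Hb.
    + intros r Hr. apply (continuous_mult (K := R_AbsRing)).
      * apply (continuous_minus (V := R_NormedModule));
          [apply continuous_scaled, continuous_J1 | continuity_by_derive; easy].
      * apply (chi_weight_continuous _ chi_weight_cutoff). lra.
    + intros r Hr. continuity_by_derive. apply Rgt_not_eq, Hw. lra.
    + intros r Hr. apply bessel_J1_sub_moment_integrand_bound; [easy | easy | easy | lra | lra].
    + rewrite (RInt_scal (V := R_CompleteNormedModule)).
      2: { apply ex_RInt_continuous_le; [exact Hb|]. intros r Hr.
           continuity_by_derive. apply Rgt_not_eq, Hw. lra. }
      apply Rmult_le_compat_l; [apply Rmult_le_pos; [lra | apply pow_le; lra]|].
      apply RInt_inv_mul_one_plus_sq_le; easy.
  - pose proof (Rabs_plus_1_le_2_jbr (ln eta)).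
    assert (ln eta < 0) by (rewrite <- ln_1; apply ln_increasing; lra).
    rewrite Rabs_left in * by lra.
    assert (0 < eta ^ 3) by (apply pow_lt; lra).
    assert (K * M * (1 - ln eta) <= (2 * K * M + 1) * jbr (ln eta)).
    { assert (0 <= jbr (ln eta)) by apply sqrt_pos.
      apply Rle_trans with (K * M * (2 * jbr (ln eta))); [apply Rmult_le_compat_l|]; lra. }
    replace (K * M * eta ^ 3 * (1 - ln eta)) with (eta ^ 3 * (K * M * (1 - ln eta))) by ring.
    replace ((2 * K * M + 1) * eta ^ 3 * jbr (ln eta))
      with (eta ^ 3 * ((2 * K * M + 1) * jbr (ln eta))) by ring.
    apply Rmult_le_compat_l; lra.
Qed.

Lemma is_RInt_gen_hankel1_integrand eta : 0 < eta ->
  is_RInt_gen (fun r => J1 (r * eta) * (chi r / r ^ 5) * r) (at_point 0) (Rbar_locally p_infty)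
    (bessel_integral J1 (fun r => chi r / r ^ 4) eta).
Proof.
  intro He. destruct (chi_weight_bound _ chi_weight_cutoff) as [C [_ HC]].
  apply (is_RInt_gen_ext_pinfty (fun r => J1 (r * eta) * (chi r / r ^ 4))).
  - intros r Hr. field. lra.
  - exact (proj1 (bessel_integral_spec J1 _ eta C continuous_J1 Rabs_J1_le_1 chi_weight_cutoff HC He)).
Qed.

Lemma hankel1_cutoff eta : 0 < eta ->
  hankel1 (fun r => chi r / r ^ 5) eta = bessel_integral J1 (fun r => chi r / r ^ 4) eta.
Proof.
  intro He. unfold hankel1. apply (is_RInt_gen_unique (V := R_CompleteNormedModule)).
  apply is_RInt_gen_hankel1_integrand, He.
Qed.

End AdmissibleCutoff.

(** * An admissible cutoff *)

Definition flat_exp (k : nat) (x : R) : R :=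
  if Rlt_dec 0 x then / x ^ k * exp (- / x) else 0.

Lemma flat_exp_pos k x : 0 < x -> flat_exp k x = / x ^ k * exp (- / x).
Proof. intro H. unfold flat_exp. destruct (Rlt_dec 0 x); [reflexivity | lra]. Qed.

Lemma flat_exp_nonpos k x : x <= 0 -> flat_exp k x = 0.
Proof. intro H. unfold flat_exp. destruct (Rlt_dec 0 x); [lra | reflexivity]. Qed.

Lemma flat_exp_gt_0 k x : 0 < x -> 0 < flat_exp k x.
Proof.
  intro H. rewrite flat_exp_pos by exact H.
  apply Rmult_lt_0_compat; [apply Rinv_0_lt_compat, pow_lt, H | apply exp_pos].
Qed.

Lemma exp_mult_INR (y : R) n : exp (INR n * y) = exp y ^ n.
Proof.
  induction n as [|n IH]; [simpl; rewrite Rmult_0_l; apply exp_0|].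
  rewrite S_INR, Rmult_plus_distr_r, Rmult_1_l, exp_plus, IH. simpl. ring.
Qed.

Lemma pow_div_le_exp (y : R) n : 0 < y -> (y / INR (S n)) ^ S n <= exp y.
Proof.
  intro Hy. assert (HS : 0 < INR (S n)) by apply lt_0_INR, Nat.lt_0_succ.
  replace y with (INR (S n) * (y / INR (S n))) at 2 by (field; lra).
  rewrite exp_mult_INR. apply pow_incr.
  pose proof (exp_ineq1_le (y / INR (S n))).
  assert (0 < y / INR (S n)) by (apply Rdiv_lt_0_compat; lra). lra.
Qed.

Lemma flat_exp_le_linear k x : 0 < x -> flat_exp k x <= INR (S k) ^ S k * x.
Proof.
  intro Hx. rewrite flat_exp_pos, exp_Ropp by exact Hx.
  assert (HS : 0 < INR (S k)) by apply lt_0_INR, Nat.lt_0_succ.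
  assert (Hp : 0 < (/ x / INR (S k)) ^ S k)
    by (apply pow_lt, Rdiv_lt_0_compat; [apply Rinv_0_lt_compat|]; lra).
  apply Rle_trans with (/ x ^ k * / ((/ x / INR (S k)) ^ S k)).
  - apply Rmult_le_compat_l; [apply Rlt_le, Rinv_0_lt_compat, pow_lt, Hx|].
    apply Rinv_le_contravar; [exact Hp | apply pow_div_le_exp, Rinv_0_lt_compat, Hx].
  - right. set (m := INR (S k)) in *. unfold Rdiv. rewrite Rpow_mult_distr, !pow_inv.
    simpl. field. repeat split; try apply pow_nonzero; lra.
Qed.

Lemma is_derive_flat_exp k x :
  is_derive (flat_exp k) x (- INR k * flat_exp (S k) x + flat_exp (S (S k)) x).
Proof.
  destruct (Rlt_le_dec 0 x) as [Hx|[Hx|Hx]]; [| |subst x].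
  - apply (is_derive_ext_loc (fun x => / x ^ k * exp (- / x))).
    + apply (filter_imp (fun t => 0 < t < x + 1)); [intros t Ht; symmetry; apply flat_exp_pos; lra|].
      apply locally_open_interval. lra.
    + rewrite !flat_exp_pos by exact Hx.
      assert (0 < x ^ k) by (apply pow_lt, Hx).
      auto_derive; [repeat split; apply Rgt_not_eq; lra|].
      destruct k as [|k]; [simpl; field; lra|].
      change (match k with 0%nat => 1 | S _ => INR k + 1 end) with (INR (S k)).
      simpl pow. field. split; [apply pow_nonzero|]; lra.
  - apply (is_derive_ext_loc (fun _ => 0)).
    + apply (filter_imp (fun t => x - 1 < t < 0)); [intros t Ht; symmetry; apply flat_exp_nonpos; lra|].
      apply locally_open_interval. lra.
    + rewrite !flat_exp_nonpos by lra.
      apply (is_derive_replace _ _ 0); [ring | auto_derive; easy].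
  - rewrite !flat_exp_nonpos by lra.
    apply (is_derive_replace _ _ 0); [ring|].
    (* At 0 the difference quotient is flat_exp (S k) h = O(h) for h > 0, and 0 for h < 0. *)
    apply is_derive_Reals. intros eps Heps.
    set (c := INR (S (S k)) ^ S (S k)).
    assert (Hc : 0 < c) by apply pow_lt, lt_0_INR, Nat.lt_0_succ.
    exists (mkposreal (eps / c) (Rdiv_lt_0_compat _ _ Heps Hc)).
    intros h Hh Hhd. simpl in Hhd.
    rewrite Rplus_0_l, (flat_exp_nonpos k 0), !Rminus_0_r by lra.
    destruct (Rlt_le_dec 0 h) as [Hp|Hn].
    + replace (flat_exp k h / h) with (flat_exp (S k) h)
        by (rewrite !flat_exp_pos by exact Hp; simpl; field; split; [apply pow_nonzero|]; lra).
      rewrite Rabs_pos_eq by (apply Rlt_le, flat_exp_gt_0, Hp).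
      eapply Rle_lt_trans; [apply flat_exp_le_linear, Hp|]. fold c.
      rewrite Rabs_pos_eq in Hhd by lra.
      apply (Rmult_lt_compat_l c) in Hhd; [|exact Hc].
      replace (c * (eps / c)) with eps in Hhd by (field; lra). lra.
    + rewrite flat_exp_nonpos by lra. unfold Rdiv. rewrite Rmult_0_l, Rabs_R0. exact Heps.
Qed.

Inductive bump_span : (R -> R) -> Prop :=
| bump_span_monomial j k : bump_span (fun t => t ^ j * flat_exp k ((t - 1) * (2 - t)))
| bump_span_plus f g : bump_span f -> bump_span g -> bump_span (fun t => f t + g t)
| bump_span_scal c f : bump_span f -> bump_span (fun t => c * f t)
| bump_span_ext f g : bump_span f -> (forall t, f t = g t) -> bump_span g.

Lemma bump_span_derive f : bump_span f -> exists f', bump_span f' /\ forall t, is_derive f t (f' t).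
Proof.
  induction 1 as [j k | f g _ [f' [Hf' Hdf]] _ [g' [Hg' Hdg]] | c f _ [f' [Hf' Hd]]
    | f g _ [f' [Hf' Hd]] He].
  - set (m := fun j k t => t ^ j * flat_exp k ((t - 1) * (2 - t))).
    exists (fun t => INR j * m (pred j) k t
      + - INR k * (3 * m j (S k) t + -2 * m (S j) (S k) t)
      + (3 * m j (S (S k)) t + -2 * m (S j) (S (S k)) t)).
    split; [unfold m; repeat constructor|].
    intro t.
    assert (H1 : is_derive (fun t => t ^ j) t (INR j * 1 * t ^ pred j))
      by (apply (is_derive_pow (fun t => t) j t 1); auto_derive; easy).
    assert (H2 : is_derive (fun t => flat_exp k ((t - 1) * (2 - t))) t
      ((3 - 2 * t) * (- INR k * flat_exp (S k) ((t - 1) * (2 - t)) + flat_exp (S (S k)) ((t - 1) * (2 - t))))).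
    { apply (is_derive_comp_R (flat_exp k) (fun t => (t - 1) * (2 - t))).
      - apply is_derive_flat_exp.
      - auto_derive; [easy | ring]. }
    apply (is_derive_replace _ _ (INR j * 1 * t ^ pred j * flat_exp k ((t - 1) * (2 - t))
      + t ^ j * ((3 - 2 * t) * (- INR k * flat_exp (S k) ((t - 1) * (2 - t))
                               + flat_exp (S (S k)) ((t - 1) * (2 - t)))))).
    { unfold m. simpl pow. ring. }
    apply (is_derive_mult (fun t => t ^ j) (fun t => flat_exp k ((t - 1) * (2 - t))) t _ _ H1 H2).
    intros; apply Rmult_comm.
  - exists (fun t => f' t + g' t). split; [constructor; easy|].
    intro t. apply (is_derive_plus f g); auto.
  - exists (fun t => c * f' t). split; [constructor; easy|].
    intro t. apply is_derive_scal; auto.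
  - exists f'. split; [easy|]. intro t. apply (is_derive_ext f g); auto.
Qed.

Lemma bump_span_vanish f : bump_span f -> forall t, t <= 1 \/ 2 <= t -> f t = 0.
Proof.
  induction 1; intros t Ht.
  - rewrite flat_exp_nonpos; [ring | destruct Ht; nra].
  - rewrite IHbump_span1, IHbump_span2 by exact Ht. ring.
  - rewrite IHbump_span by exact Ht. ring.
  - rewrite <- H0. auto.
Qed.

Lemma bump_span_mult_id f : bump_span f -> bump_span (fun t => t * f t).
Proof.
  induction 1.
  - apply (bump_span_ext (fun t => t ^ S j * flat_exp k ((t - 1) * (2 - t))));
      [constructor | intro t; simpl; ring].
  - apply (bump_span_ext (fun t => t * f t + t * g t)); [constructor; easy | intro t; ring].
  - apply (bump_span_ext (fun t => c * (t * f t))); [constructor; easy | intro t; ring].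
  - apply (bump_span_ext (fun t => t * f t)); [easy | intro t; rewrite H0; reflexivity].
Qed.

Lemma bump_span_continuous f : bump_span f -> forall t, continuous f t.
Proof.
  intros Hf t. destruct (bump_span_derive f Hf) as [f' [_ Hd]].
  apply (ex_derive_continuous (K := R_AbsRing) (V := R_NormedModule)). eexists. apply Hd.
Qed.

Lemma derive_closed_ex_derive_n (P : (R -> R) -> Prop) :
  (forall f, P f -> exists f', P f' /\ forall x, is_derive f x (f' x)) ->
  forall f, P f -> forall n x, ex_derive_n f n x.
Proof.
  intros HP f Hf n x.
  assert (HDn : forall n, exists g, P g /\ forall x, Derive_n f n x = g x).
  { induction n0 as [|n0 [g [Hg Eg]]]; [exists f; easy|].
    destruct (HP g Hg) as [g' [Hg' Hd]]. exists g'. split; [easy|].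
    intro y. simpl. rewrite (Derive_ext (Derive_n f n0) g y Eg). apply is_derive_unique, Hd. }
  destruct n as [|n]; [exact I|].
  destruct (HDn n) as [g [Hg Eg]]. destruct (HP g Hg) as [g' [_ Hd]].
  apply (ex_derive_ext g); [intro t; symmetry; apply Eg | eexists; apply Hd].
Qed.

Definition bump (t : R) : R := flat_exp 0 ((t - 1) * (2 - t)).

Lemma bump_span_bump : bump_span bump.
Proof.
  apply (bump_span_ext (fun t => t ^ 0 * flat_exp 0 ((t - 1) * (2 - t))));
    [constructor | intro t; unfold bump; ring].
Qed.

Lemma bump_continuous t : continuous bump t.
Proof. apply bump_span_continuous, bump_span_bump. Qed.

Lemma bump_pos t : 1 < t < 2 -> 0 < bump t.
Proof. intro H. apply flat_exp_gt_0. nra. Qed.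

Lemma bump_integral_pos : 0 < RInt bump 1 2.
Proof. apply RInt_gt_0; [lra | exact bump_pos | intros; apply bump_continuous]. Qed.

Definition step (x : R) : R := RInt bump 1 x / RInt bump 1 2.

Lemma ex_RInt_bump a b : ex_RInt bump a b.
Proof. apply (ex_RInt_continuous (V := R_CompleteNormedModule)). intros; apply bump_continuous. Qed.

Lemma is_derive_step x : is_derive step x (bump x / RInt bump 1 2).
Proof.
  assert (H : is_derive (fun y => RInt bump 1 y) x (bump x)).
  { apply (is_derive_RInt (V := R_CompleteNormedModule) bump _ 1); [|apply bump_continuous].
    exists (mkposreal 1 Rlt_0_1). intros y _.
    apply (RInt_correct (V := R_CompleteNormedModule)), ex_RInt_bump. }
  apply (is_derive_ext_R (fun y => / RInt bump 1 2 * RInt bump 1 y));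
    [intro t; unfold step, Rdiv; apply Rmult_comm|].
  apply (is_derive_replace _ _ (/ RInt bump 1 2 * bump x)); [unfold Rdiv; apply Rmult_comm|].
  apply is_derive_scal, H.
Qed.

Lemma step_continuous x : continuous step x.
Proof.
  apply (ex_derive_continuous (K := R_AbsRing) (V := R_NormedModule)).
  eexists. apply is_derive_step.
Qed.

Lemma step_vanish x : x <= 1 -> step x = 0.
Proof.
  intro H. unfold step.
  rewrite <- (opp_RInt_swap (V := R_CompleteNormedModule)) by apply ex_RInt_bump.
  rewrite (is_RInt_unique bump x 1 0).
  - unfold opp; simpl. unfold Rdiv. ring.
  - apply is_RInt_zero_on_open; [exact H|]. intros r Hr. apply (bump_span_vanish _ bump_span_bump). lra.
Qed.

Lemma step_one x : 2 <= x -> step x = 1.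
Proof.
  intro H. unfold step.
  rewrite <- (RInt_Chasles_R bump 1 2 x) by apply ex_RInt_bump.
  rewrite (is_RInt_unique bump 2 x 0).
  - field. apply Rgt_not_eq, bump_integral_pos.
  - apply is_RInt_zero_on_open; [exact H|]. intros r Hr. apply (bump_span_vanish _ bump_span_bump). lra.
Qed.

Definition euler_op (c : R) (u : R -> R) (x : R) : R := x * Derive u x + c * u x.

Definition moment (w u : R -> R) : R := RInt (fun x => w x * u x) 1 2.

Lemma bump_span_euler_op c u : bump_span u -> bump_span (euler_op c u).
Proof.
  intro Hu. destruct (bump_span_derive u Hu) as [u' [Hu' Hd]].
  apply (bump_span_ext (fun x => x * u' x + c * u x)).
  - constructor; [apply bump_span_mult_id, Hu' | constructor; exact Hu].
  - intro t. unfold euler_op. rewrite (is_derive_unique _ _ _ (Hd t)). reflexivity.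
Qed.

Lemma is_RInt_parts_bump_span (F F' u u' : R -> R) : bump_span u -> bump_span u' ->
  (forall x, is_derive u x (u' x)) ->
  (forall x, 1 <= x <= 2 -> is_derive F x (F' x)) -> (forall x, 1 <= x <= 2 -> continuous F' x) ->
  is_RInt (fun x => F' x * u x + F x * u' x) 1 2 0.
Proof.
  intros Hu Hu' Hd HF HF'.
  replace 0 with (F 2 * u 2 - F 1 * u 1) by (rewrite !(bump_span_vanish u Hu) by lra; ring).
  apply (is_RInt_scal_derive (V := R_CompleteNormedModule) F u);
    rewrite Rmin_left, Rmax_right by lra; intros t Ht;
    [apply HF, Ht | apply Hd | apply HF', Ht | apply bump_span_continuous, Hu'].
Qed.

Lemma moment_euler_op (w w' v : R -> R) lam c u : bump_span u ->
  (forall x, 1 <= x <= 2 -> is_derive w x (w' x)) ->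
  (forall x, 1 <= x <= 2 -> continuous w' x) ->
  (forall x, 1 <= x <= 2 -> continuous v x) ->
  (forall x, 1 <= x <= 2 -> x * w' x = lam * w x + v x) ->
  moment w (euler_op c u) = (c - 1 - lam) * moment w u - moment v u.
Proof.
  intros Hu Hw Hw' Hv Hrel. destruct (bump_span_derive u Hu) as [u' [Hu' Hd]].
  assert (Hwc : forall x, 1 <= x <= 2 -> continuous w x).
  { intros x Hx. apply (ex_derive_continuous (K := R_AbsRing) (V := R_NormedModule)).
    eexists. apply Hw, Hx. }
  assert (Hex : forall f : R -> R, (forall x, 1 <= x <= 2 -> continuous f x) ->
    ex_RInt (fun x => f x * u x) 1 2).
  { intros f Hf. apply ex_RInt_continuous_le; [lra|]. intros x Hx.
    apply (continuous_mult (K := R_AbsRing)); [apply Hf, Hx | apply bump_span_continuous, Hu]. }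
  assert (Hparts : is_RInt (fun x => (w x + x * w' x) * u x + x * w x * u' x) 1 2 0).
  { apply (is_RInt_parts_bump_span (fun x => x * w x)); [easy | easy | easy | |].
    - intros x Hx. apply (is_derive_replace _ _ (1 * w x + x * w' x)); [ring|].
      apply (is_derive_mult (fun x => x) w); [auto_derive; easy | apply Hw, Hx | intros; apply Rmult_comm].
    - intros x Hx. apply (continuous_plus (V := R_NormedModule)); [apply Hwc, Hx|].
      apply (continuous_mult (K := R_AbsRing)); [apply continuous_id | apply Hw', Hx]. }
  unfold moment, euler_op.
  rewrite (RInt_ext_R _ (fun x => 1 * ((w x + x * w' x) * u x + x * w x * u' x)
    + 1 * ((c - 1 - lam) * (w x * u x) + -1 * (v x * u x)))).
  2: { intros x Hx. rewrite Rmin_left, Rmax_right in Hx by lra.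
       rewrite (is_derive_unique _ _ _ (Hd x)), (Hrel x) by lra. ring. }
  rewrite RInt_lincomb, (is_RInt_unique _ _ _ _ Hparts), RInt_lincomb;
    [ring | apply Hex, Hwc | apply Hex, Hv | eexists; exact Hparts |].
  apply ex_RInt_lincomb; [apply Hex, Hwc | apply Hex, Hv].
Qed.

Definition inv_cube (x : R) : R := / x ^ 3.
Definition cube (x : R) : R := x ^ 3.
Definition cube_ln (x : R) : R := x ^ 3 * ln x.

Lemma moment_fun_zero u : moment (fun _ => 0) u = 0.
Proof.
  unfold moment. apply is_RInt_unique, is_RInt_zero_on_open; [lra|]. intros. ring.
Qed.

Lemma moment_inv_cube_euler_op c u : bump_span u ->
  moment inv_cube (euler_op c u) = (c + 2) * moment inv_cube u.
Proof.
  intro Hu. rewrite (moment_euler_op inv_cube (fun x => -3 / x ^ 4) (fun _ => 0) (-3)), moment_fun_zero;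
    [ring | exact Hu | | | intros; apply continuous_const |].
  - intros x Hx. unfold inv_cube. auto_derive; [change (x ^ 3 <> 0); apply pow_nonzero; lra | field; lra].
  - intros x Hx. continuity_by_derive. change (x ^ 4 <> 0). apply pow_nonzero. lra.
  - intros x Hx. unfold inv_cube. field. lra.
Qed.

Lemma moment_cube_euler_op c u : bump_span u ->
  moment cube (euler_op c u) = (c - 4) * moment cube u.
Proof.
  intro Hu. rewrite (moment_euler_op cube (fun x => 3 * x ^ 2) (fun _ => 0) 3), moment_fun_zero;
    [ring | exact Hu | | | intros; apply continuous_const |].
  - intros x Hx. unfold cube. auto_derive; [easy | ring].
  - intros x Hx. continuity_by_derive. easy.
  - intros x Hx. unfold cube. ring.
Qed.

Lemma moment_cube_ln_euler_op c u : bump_span u ->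
  moment cube_ln (euler_op c u) = (c - 4) * moment cube_ln u - moment cube u.
Proof.
  intro Hu. rewrite (moment_euler_op cube_ln (fun x => 3 * x ^ 2 * ln x + x ^ 2) cube 3);
    [ring | exact Hu | | | |].
  - intros x Hx. unfold cube_ln. auto_derive; [lra | field; lra].
  - intros x Hx. continuity_by_derive. lra.
  - intros x Hx. unfold cube. continuity_by_derive. easy.
  - intros x Hx. unfold cube_ln, cube. ring.
Qed.

Definition corrector1 : R -> R := euler_op 4 (euler_op 4 bump).
Definition corrector2 : R -> R := euler_op 4 (euler_op (-2) bump).

Lemma bump_span_corrector1 : bump_span corrector1.
Proof. apply bump_span_euler_op, bump_span_euler_op, bump_span_bump. Qed.

Lemma bump_span_corrector2 : bump_span corrector2.
Proof. apply bump_span_euler_op, bump_span_euler_op, bump_span_bump. Qed.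

Lemma corrector1_moments :
  moment inv_cube corrector1 = 36 * moment inv_cube bump /\
  moment cube corrector1 = 0 /\ moment cube_ln corrector1 = 0.
Proof.
  pose proof bump_span_bump as Hb. pose proof (bump_span_euler_op 4 bump Hb) as Hb4.
  unfold corrector1.
  rewrite !moment_inv_cube_euler_op, moment_cube_euler_op, moment_cube_ln_euler_op,
    moment_cube_euler_op by easy.
  repeat split; ring.
Qed.

Lemma corrector2_moments :
  moment inv_cube corrector2 = 0 /\ moment cube corrector2 = 0 /\
  moment cube_ln corrector2 = 6 * moment cube bump.
Proof.
  pose proof bump_span_bump as Hb. pose proof (bump_span_euler_op (-2) bump Hb) as Hb2.
  unfold corrector2.
  rewrite !moment_inv_cube_euler_op, moment_cube_euler_op, moment_cube_ln_euler_op,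
    moment_cube_euler_op by easy.
  repeat split; ring.
Qed.

Lemma is_RInt_gen_inv_cube_tail :
  is_RInt_gen inv_cube (at_point 2) (Rbar_locally p_infty) (/ 8).
Proof.
  assert (Hprim : forall b, 2 <= b -> is_RInt inv_cube 2 b (/ 8 - / (2 * b ^ 2))).
  { intros b Hb.
    replace (/ 8 - / (2 * b ^ 2)) with (minus ((fun x => - / (2 * x ^ 2)) b) ((fun x => - / (2 * x ^ 2)) 2))
      by (unfold minus, plus, opp; simpl; field; lra).
    apply (is_RInt_derive (V := R_CompleteNormedModule) (fun x => - / (2 * x ^ 2))); rewrite Rmin_left, Rmax_right by lra;
      intros x Hx; unfold inv_cube.
    - auto_derive; [change (2 * x ^ 2 <> 0); apply Rgt_not_eq; nra | field; lra].
    - continuity_by_derive. change (x ^ 3 <> 0). apply pow_nonzero. lra. }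
  apply is_RInt_gen_pinfty_of_is_lim; [intros b Hb; eexists; apply Hprim, Hb|].
  apply (is_lim_ext_loc (fun b => / 8 - / (2 * b ^ 2))).
  { exists 2. intros b Hb. symmetry. apply is_RInt_unique, Hprim. lra. }
  replace (Finite (/ 8)) with (Finite (/ 8 - 0)) by (f_equal; ring).
  apply is_lim_minus'; [apply is_lim_const|].
  apply (is_lim_pinfty_zero_of_le_inv _ (/ 2)). intros b Hb.
  rewrite Rabs_pos_eq by (apply Rlt_le, Rinv_0_lt_compat; nra).
  unfold Rdiv. rewrite <- Rinv_mult. apply Rinv_le_contravar; nra.
Qed.

Lemma continuous_cube_ln x : 0 <= x -> continuous cube_ln x.
Proof.
  intros [Hx|<-].
  - unfold cube_ln. continuity_by_derive. lra.
  - (* |x^3 ln x| <= x^2 near 0, since - ln x < 1 / x *)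
    apply continuity_pt_filterlim. intros eps Heps.
    exists (Rmin 1 eps). split; [apply Rmin_pos; lra|].
    intros y [_ Hy]. change R in y. change (Rabs (y - 0) < Rmin 1 eps) in Hy.
    change (Rabs (cube_ln y - cube_ln 0) < eps).
    replace (cube_ln 0) with 0 by (unfold cube_ln; ring).
    rewrite Rminus_0_r in *. unfold cube_ln.
    pose proof (Rmin_l 1 eps). pose proof (Rmin_r 1 eps).
    destruct (Rlt_le_dec 0 y) as [Hp|Hn].
    + rewrite Rabs_pos_eq in Hy by lra.
      assert (Hl : ln y <= 0) by (rewrite <- ln_1; apply Rlt_le, ln_increasing; lra).
      assert (Hl2 : - ln y < / y).
      { rewrite <- ln_Rinv by lra. rewrite <- (ln_exp (/ y)) at 2.
        apply ln_increasing; [apply Rinv_0_lt_compat; lra|].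
        pose proof (exp_ineq1_le (/ y)). lra. }
      rewrite Rabs_mult, Rabs_pos_eq, Rabs_left1 by (try apply pow_le; lra).
      apply Rle_lt_trans with (y ^ 3 * / y); [apply Rmult_le_compat_l; [apply pow_le|]; lra|].
      replace (y ^ 3 * / y) with (y * y) by (field; lra). nra.
    + unfold ln. destruct (Rlt_dec 0 y); [exfalso; lra|]. rewrite Rmult_0_r, Rabs_R0. lra.
Qed.

Lemma is_int_0_inf_div_cube (f : R -> R) :
  (forall x, continuous f x) -> (forall x, x <= 1 -> f x = 0) -> (forall x, 2 <= x -> f x = 1) ->
  is_int_0_inf (fun x => f x / x ^ 3) (moment inv_cube f + / 8).
Proof.
  intros Hc H0 H1. unfold is_int_0_inf.
  replace (moment inv_cube f + / 8) with (0 + moment inv_cube f + / 8) by ring.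
  apply (is_RInt_gen_pinfty_Chasles _ 0 2).
  - apply (is_RInt_Chasles_R _ 0 1 2).
    + apply is_RInt_zero_on_open; [lra|]. intros r Hr. rewrite H0 by lra. unfold Rdiv. ring.
    + apply (is_RInt_ext_R (fun x => inv_cube x * f x)).
      { intros x Hx. rewrite Rmin_left, Rmax_right in Hx by lra. unfold inv_cube. field. lra. }
      apply (RInt_correct (V := R_CompleteNormedModule)), ex_RInt_continuous_le; [lra|].
      intros x Hx. apply (continuous_mult (K := R_AbsRing)); [|apply Hc].
      unfold inv_cube. continuity_by_derive. change (x ^ 3 <> 0). apply pow_nonzero. lra.
  - apply (is_RInt_gen_ext_pinfty inv_cube); [|exact is_RInt_gen_inv_cube_tail].
    intros x Hx. rewrite H1 by lra. unfold inv_cube, Rdiv. ring.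
Qed.

Lemma is_int_0_inf_mul_one_minus (w f : R -> R) :
  (forall x, 0 <= x <= 2 -> continuous w x) ->
  (forall x, continuous f x) -> (forall x, x <= 1 -> f x = 0) -> (forall x, 2 <= x -> f x = 1) ->
  is_int_0_inf (fun x => w x * (1 - f x)) (RInt w 0 2 - moment w f).
Proof.
  intros Hw Hc H0 H1. unfold is_int_0_inf.
  replace (RInt w 0 2 - moment w f) with (RInt w 0 2 - (0 + moment w f) + 0) by ring.
  apply (is_RInt_gen_pinfty_Chasles _ 0 2).
  - apply (is_RInt_ext_R (fun x => w x - w x * f x)); [intros; ring|].
    apply is_RInt_minus_R.
    + apply (RInt_correct (V := R_CompleteNormedModule)), ex_RInt_continuous_le; [lra | exact Hw].
    + apply (is_RInt_Chasles_R _ 0 1 2).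
      * apply is_RInt_zero_on_open; [lra|]. intros r Hr. rewrite H0 by lra. ring.
      * apply (RInt_correct (V := R_CompleteNormedModule)), ex_RInt_continuous_le; [lra|].
        intros x Hx. apply (continuous_mult (K := R_AbsRing)); [apply Hw; lra | apply Hc].
  - apply is_RInt_gen_pinfty_zero_tail. intros x Hx. rewrite H1 by lra. ring.
Qed.

(* With the moment tables of the correctors, the three moment conditions on
   [chi0] form a triangular system in [gamma0], [beta0], [alpha0]. *)
Definition gamma0 : R := (RInt cube 0 2 - moment cube step) / moment cube bump.
Definition beta0 : R :=
  (RInt cube_ln 0 2 - moment cube_ln step - gamma0 * moment cube_ln bump) / (6 * moment cube bump).
Definition alpha0 : R :=
  - (/ 8 + moment inv_cube step + gamma0 * moment inv_cube bump) / (36 * moment inv_cube bump).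

Definition chi0 (x : R) : R :=
  step x + alpha0 * corrector1 x + beta0 * corrector2 x + gamma0 * bump x.

Lemma moment_bump_pos (w : R -> R) :
  (forall x, 1 <= x <= 2 -> continuous w x) -> (forall x, 1 < x < 2 -> 0 < w x) ->
  0 < moment w bump.
Proof.
  intros Hw Hpos. apply RInt_gt_0; [lra | |].
  - intros x Hx. apply Rmult_lt_0_compat; [apply Hpos | apply bump_pos]; exact Hx.
  - intros x Hx. apply (continuous_mult (K := R_AbsRing)); [apply Hw, Hx | apply bump_continuous].
Qed.

Lemma moment_inv_cube_bump_pos : 0 < moment inv_cube bump.
Proof.
  apply moment_bump_pos; intros x Hx; unfold inv_cube.
  - continuity_by_derive. change (x ^ 3 <> 0). apply pow_nonzero. lra.
  - apply Rinv_0_lt_compat, pow_lt. lra.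
Qed.

Lemma moment_cube_bump_pos : 0 < moment cube bump.
Proof.
  apply moment_bump_pos; intros x Hx; unfold cube; [continuity_by_derive; easy | apply pow_lt; lra].
Qed.

Lemma moment_chi0 (w : R -> R) : (forall x, 1 <= x <= 2 -> continuous w x) ->
  moment w chi0 = moment w step + alpha0 * moment w corrector1
    + beta0 * moment w corrector2 + gamma0 * moment w bump.
Proof.
  intro Hw.
  assert (Hex : forall u, (forall x, continuous u x) -> ex_RInt (fun x => w x * u x) 1 2).
  { intros u Hu. apply ex_RInt_continuous_le; [lra|]. intros x Hx.
    apply (continuous_mult (K := R_AbsRing)); [apply Hw, Hx | apply Hu]. }
  assert (Hs : ex_RInt (fun x => w x * step x) 1 2) by apply Hex, step_continuous.
  assert (H1 : ex_RInt (fun x => w x * corrector1 x) 1 2)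
    by apply Hex, bump_span_continuous, bump_span_corrector1.
  assert (H2 : ex_RInt (fun x => w x * corrector2 x) 1 2)
    by apply Hex, bump_span_continuous, bump_span_corrector2.
  assert (Hb : ex_RInt (fun x => w x * bump x) 1 2) by apply Hex, bump_continuous.
  unfold moment, chi0.
  rewrite (RInt_ext_R _ (fun x => 1 * (1 * (w x * step x) + alpha0 * (w x * corrector1 x))
    + 1 * (beta0 * (w x * corrector2 x) + gamma0 * (w x * bump x)))) by (intros; ring).
  rewrite RInt_lincomb by (apply ex_RInt_lincomb; easy).
  rewrite (RInt_lincomb (fun x => w x * step x)), (RInt_lincomb (fun x => w x * corrector2 x))
    by easy.
  ring.
Qed.

Lemma bump_span_chi0_correction :
  bump_span (fun x => alpha0 * corrector1 x + beta0 * corrector2 x + gamma0 * bump x).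
Proof.
  apply bump_span_plus; [apply bump_span_plus|]; apply bump_span_scal;
    [apply bump_span_corrector1 | apply bump_span_corrector2 | apply bump_span_bump].
Qed.

Lemma chi0_step x : x <= 1 \/ 2 <= x -> chi0 x = step x.
Proof.
  intro Hx. pose proof (bump_span_vanish _ bump_span_chi0_correction x Hx) as H.
  unfold chi0. simpl in H. lra.
Qed.

Lemma chi0_smooth n x : ex_derive_n chi0 n x.
Proof.
  destruct (bump_span_derive _ bump_span_chi0_correction) as [g' [Hg' Hd]].
  apply (derive_closed_ex_derive_n (fun f => f = chi0 \/ bump_span f)); [|now left].
  intros f [->|Hf].
  - exists (fun x => / RInt bump 1 2 * bump x + g' x). split.
    + right. apply bump_span_plus; [apply bump_span_scal, bump_span_bump | exact Hg'].
    + intro y. apply (is_derive_ext_R (fun x => step x + (alpha0 * corrector1 x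
        + beta0 * corrector2 x + gamma0 * bump x))); [intro t; unfold chi0; ring|].
      apply (is_derive_plus step); [|apply Hd].
      apply (is_derive_replace _ _ (bump y / RInt bump 1 2)); [unfold Rdiv; ring | apply is_derive_step].
  - destruct (bump_span_derive f Hf) as [f' [Hf' Hdf]]. exists f'. split; [now right | exact Hdf].
Qed.

Lemma chi0_continuous x : continuous chi0 x.
Proof.
  apply (ex_derive_continuous (K := R_AbsRing) (V := R_NormedModule)), (chi0_smooth 1).
Qed.

Lemma chi0_vanish x : x <= 1 -> chi0 x = 0.
Proof. intro H. rewrite chi0_step by lra. apply step_vanish, H. Qed.

Lemma chi0_one x : 2 <= x -> chi0 x = 1.
Proof. intro H. rewrite chi0_step by lra. apply step_one, H. Qed.

Lemma admissible_chi0 : admissible_cutoff chi0.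
Proof.
  assert (Hinv : forall x, 1 <= x <= 2 -> continuous inv_cube x).
  { intros x Hx. unfold inv_cube. continuity_by_derive. change (x ^ 3 <> 0). apply pow_nonzero. lra. }
  assert (Hcube : forall x, continuous cube x) by (intro x; unfold cube; continuity_by_derive; easy).
  assert (Hcube_ln : forall x, 0 <= x -> continuous cube_ln x) by apply continuous_cube_ln.
  pose proof moment_inv_cube_bump_pos. pose proof moment_cube_bump_pos.
  destruct corrector1_moments as [M11 [M12 M13]]. destruct corrector2_moments as [M21 [M22 M23]].
  split; [intros n x _; apply chi0_smooth|].
  split; [intros x Hx; apply chi0_vanish; lra|].
  split; [intros x Hx; apply chi0_one; lra|].
  split; [|split].
  - replace 0 with (moment inv_cube chi0 + / 8).
    + apply is_int_0_inf_div_cube; [exact chi0_continuous | exact chi0_vanish | exact chi0_one].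
    + rewrite moment_chi0, M11, M21 by exact Hinv. unfold alpha0. field. lra.
  - replace 0 with (RInt cube 0 2 - moment cube chi0).
    + apply (is_int_0_inf_mul_one_minus cube);
        [intros; apply Hcube | exact chi0_continuous | exact chi0_vanish | exact chi0_one].
    + rewrite moment_chi0, M12, M22 by (intros; apply Hcube). unfold gamma0. field. lra.
  - replace 0 with (RInt cube_ln 0 2 - moment cube_ln chi0).
    + apply (is_int_0_inf_mul_one_minus cube_ln);
        [intros; apply Hcube_ln; lra | exact chi0_continuous | exact chi0_vanish | exact chi0_one].
    + rewrite moment_chi0, M13, M23 by (intros; apply Hcube_ln; lra). unfold beta0. field. lra.
Qed.

Theorem lemma4p28 :
  (exists chi : R -> R, admissible_cutoff chi) /\
  (forall chi : R -> R, admissible_cutoff chi ->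
     (forall eta, 0 < eta -> ex_int_0_inf (fun r => J1 (r * eta) * (chi r / r ^ 5) * r)) /\
     (exists C, 0 < C /\
        forall eta, 0 < eta < 1 ->
          Rabs (hankel1 (fun r => chi r / r ^ 5) eta) <= C * eta ^ 3 * jbr (ln eta)) /\
     (forall k : nat, exists Ck, 0 < Ck /\
        forall eta, 1 <= eta ->
          Rabs (hankel1 (fun r => chi r / r ^ 5) eta) <= Ck / eta ^ k)).
Proof.
  split; [exists chi0; exact admissible_chi0|].
  intros chi Hchi. split; [|split].
  - intros eta He. eexists. apply (is_RInt_gen_hankel1_integrand chi Hchi eta He).
  - destruct (bessel_integral_J1_small_eta chi Hchi) as [C [HC Hsmall]].
    exists C. split; [exact HC|]. intros eta He.
    rewrite (hankel1_cutoff chi Hchi) by lra. apply Hsmall, He.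
  - intro k.
    destruct (bessel_integral_decay chi Hchi k _ (chi_weight_cutoff chi)) as [C [HC Hdecay]].
    exists (C + 1). split; [lra|]. intros eta He.
    rewrite (hankel1_cutoff chi Hchi) by lra.
    apply Rle_trans with (C / eta ^ k); [apply (proj2 (Hdecay eta He))|].
    apply Rmult_le_compat_r; [apply Rlt_le, Rinv_0_lt_compat, pow_lt|]; lra.
Qed.
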